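(* Let $a>0$, $m\in\mathbb{N}$, and let $T=(T_k)\in\mathcal{T}$ satisfy $$\exp\left(\int_0^x\log\bigl(1-P_1(T_k(\alpha))\bigr)\,d\alpha\right)+\prod_{i=1}^k\bigl(1-P_2(T_i(x))\bigr)=1\qquad\text{for all }0<x\le a,\ 1\le k\le m.$$ Then any pair of $T$-strategies (one for each player) is an equilibrium situation (saddle point) of the game $G_{am}(P,A)$, i.e. for every consumption function $\alpha$ of Player I and every action-moment vector $\eta$ of Player II, the realized payoffs satisfy $K(\alpha;\eta^T)\le v_m(a)\le K(\alpha^T;\eta)$, where $\alpha^T$ (resp. $\eta^T$) is the play realized by Player I's (resp. Player II's) $T$-strategy against $\eta$ (resp. $\alpha$). The value of the game is $$v_m(a)=A_1-(A_1+A_2)\exp\left(\int_0^a\log\bigl(1-P_1(T_m(\alpha))\bigr)\,d\alpha\right)=(A_1+A_2)\prod_{i=1}^m\bigl(1-P_2(T_i(a))\bigr)-A_2 .$$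
   Context: The game $G_{am}(P,A)$ (noisy fighter-bomber duel). Two players act during $[0,1]$. Player I has an infinitely divisible resource $a>0$; Player II has $m\in\mathbb{Z}_{\ge0}$ indivisible units. Effectiveness functions $P_1,P_2:[0,1]\to[0,1]$ are continuously differentiable, increasing, $P_j(0)=0$, $P_j(1)=1$, $P_j(t)<1$ for $t<1$; $p=1-P_1$, $q=1-P_2$. Profits $A_1,A_2>0$. Player I's consumption function $\alpha(t)$ (remaining resource) is nonincreasing, continuous, piecewise $C^1$ on $(0,1)$, $\alpha(0)=a$; intensity $\xi=-\alpha'$. Player II's consumption function $n(t)$ is a nonincreasing left-continuous step function with $n(0)=m$; its jump points $0\le\eta_m\le\dots\le\eta_1\le1$ are his action moments, $\eta=(\eta_1,\dots,\eta_m)$. If Player II does not act in $[t_1,t_2]$, Player I succeeds there with probability $\varphi(\alpha,t_1,t_2)=1-\exp\bigl(-\int_{t_1}^{t_2}\log(1-P_1(\tau))\,d\alpha(\tau)\bigr)$; a unit used by Player II at time $t$ succeeds with probability $P_2(t)$. The game stops at the first success; the successful player $j$ gets $A_j$ from the other; payoff $0$ if nobody or both succeed simultaneously. A player not having exhausted his resource consumes it by time $1$ so as to succeed with probability $1$. Expected payoff to Player I: for $m=0$, $K=A_1$ if $a>0$, $K=0$ if $a=0$; for $m\ge1$, $K(\alpha;\eta_1,\dots,\eta_m)=A_1\varphi(\alpha,0,\eta_m)-A_2(1-\varphi(\alpha,0,\eta_m))P_2(\eta_m)+(1-P_2(\eta_m))(1-\varphi(\alpha,0,\eta_m))K(\alpha_m;\eta_1,\dots,\eta_{m-1})$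 with $\alpha_m=\alpha(\eta_m)$ on $[0,\eta_m)$ and $\alpha_m=\alpha$ on $[\eta_m,1]$. The duel is noisy: at each moment each player knows both players' current remaining resources $\alpha,n$. A strategy of Player I is a rule $\xi=u(t,\alpha,n)$ giving his consumption intensity; a strategy of Player II is a rule $\eta_n=v(\alpha,n)$ giving his next action moment. The class $\mathcal{T}$: sequences $T=(T_1,T_2,\dots)$ of functions on $[0,\infty)$, each continuous on $[0,\infty)$ and $C^1$ on $(0,\infty)$, with $0<T_k\le1$, $T_k'(x)<0$ and $T_{k+1}(x)<T_k(x)$ for $x>0$, and $T_k(0)=1$. $T$-strategies: with $\alpha,n$ the current remaining resources at time $t$, Player I uses intensity $\xi^T(t)=0$ if $t<T_n(\alpha)$ and $\xi^T(t)=-1/T_n'(\alpha)$ if $t=T_n(\alpha)$; Player II's next action moment is $\eta^T=T_n(\alpha)$. *)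

From Stdlib Require Import Reals Lra Lia ClassicalEpsilon.
Open Scope R_scope.

Fixpoint fsum (N : nat) (f : nat -> R) : R :=
  match N with O => 0 | S n => fsum n f + f n end.

Fixpoint prodR (k : nat) (f : nat -> R) : R :=
  match k with O => 1 | S n => prodR n f * f (S n) end.

(* Riemann integral of f over [a,b] (0 if f is not Riemann integrable) *)
Definition Rint (f : R -> R) (a b : R) : R :=
  match excluded_middle_informative (inhabited (Riemann_integrable f a b)) with
  | left H => RiemannInt (@epsilon _ H (fun _ => True))
  | right _ => 0
  end.

(* exp( \int_0^x g ), the integral being improper at 0 (value 0 if the
   integral is -infinity): the limit, as e -> 0+, of exp(\int_e^x g). *)
Definition exp_int0 (g : R -> R) (x : R) : R :=
  @epsilon R (inhabits 0)
    (fun l => limit1_in (fun e => exp (Rint g e x)) (fun e => 0 < e <= x) l 0).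

Definition tagged_partition (s u : R) (N : nat) (x y : nat -> R) : Prop :=
  x 0%nat = s /\ x N = u /\
  (forall i, (i < N)%nat -> x i < x (S i) /\ x i <= y i <= x (S i)).

Definition RS_sum (h g : R -> R) (N : nat) (x y : nat -> R) : R :=
  fsum N (fun i => h (y i) * (g (x (S i)) - g (x i))).

Definition is_RS_integral (h g : R -> R) (s u I : R) : Prop :=
  forall eps, 0 < eps -> exists delta, 0 < delta /\
    forall N x y, tagged_partition s u N x y ->
      (forall i, (i < N)%nat -> x (S i) - x i < delta) ->
      Rabs (RS_sum h g N x y - I) < eps.

Definition RS_int (h g : R -> R) (s u : R) : R :=
  @epsilon R (inhabits 0) (is_RS_integral h g s u).

Definition deriv_within01 (f : R -> R) (t l : R) : Prop :=
  limit1_in (fun s => (f s - f t) / (s - t)) (fun s => 0 <= s <= 1 /\ s <> t) l t.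

Definition effectiveness (P : R -> R) : Prop :=
  P 0 = 0 /\ P 1 = 1 /\
  (forall t, 0 <= t < 1 -> P t < 1) /\
  (forall t, 0 <= t <= 1 -> 0 <= P t <= 1) /\
  (forall s t, 0 <= s -> s < t -> t <= 1 -> P s < P t) /\
  exists dP : R -> R,
    (forall t, 0 <= t <= 1 -> deriv_within01 P t (dP t)) /\
    (forall t, 0 <= t <= 1 -> limit1_in dP (fun s => 0 <= s <= 1) (dP t) t).

Definition piecewise_C1_01 (f : R -> R) : Prop :=
  exists (N : nat) (s : nat -> R),
    s 0%nat = 0 /\ s N = 1 /\
    (forall j, (j < N)%nat -> s j < s (S j)) /\
    (forall j, (j < N)%nat -> exists df : R -> R,
       forall t, s j < t < s (S j) ->
         derivable_pt_lim f t (df t) /\ continuity_pt df t).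

Definition consumption_fn (a : R) (alpha : R -> R) : Prop :=
  alpha 0 = a /\
  (forall s t, 0 <= s -> s <= t -> t <= 1 -> alpha t <= alpha s) /\
  (forall t, 0 <= t <= 1 -> 0 <= alpha t) /\
  (forall t, 0 <= t <= 1 -> limit1_in alpha (fun s => 0 <= s <= 1) (alpha t) t) /\
  piecewise_C1_01 alpha.

Definition action_moments (m : nat) (eta : nat -> R) : Prop :=
  (forall k, (1 <= k <= m)%nat -> 0 <= eta k <= 1) /\
  (forall k, (1 <= k)%nat -> (k < m)%nat -> eta (S k) <= eta k).

Definition lnq (P1 : R -> R) (t : R) : R := ln (1 - P1 t).

(* phi(alpha,0,t) = 1 - exp(- \int_0^t log(1-P1) d alpha); at t = 1 the
   Stieltjes integral is improper (log(1-P1(1)) = -infinity) and is taken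
   as the limit u -> 1-. *)
Definition phi (P1 : R -> R) (alpha : R -> R) (t : R) : R :=
  if Rlt_dec t 1 then 1 - exp (- RS_int (lnq P1) alpha 0 t)
  else 1 - @epsilon R (inhabits 0)
             (fun l => limit1_in (fun u => exp (- RS_int (lnq P1) alpha 0 u))
                                 (fun u => 0 <= u < 1) l 1).

Definition freeze (alpha : R -> R) (e : R) : R -> R :=
  fun t => if Rlt_dec t e then alpha e else alpha t.

Fixpoint Kpay (P1 P2 : R -> R) (A1 A2 : R) (m : nat) (eta : nat -> R)
         (alpha : R -> R) : R :=
  match m with
  | O => if Rlt_dec 0 (alpha 0) then A1 else 0
  | S m' =>
      let e := eta m in
      let f := phi P1 alpha e in
      A1 * f - A2 * (1 - f) * P2 e
      + (1 - P2 e) * (1 - f) * Kpay P1 P2 A1 A2 m' eta (freeze alpha e)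
  end.

(* the class \mathcal{T} (T_k for k >= 1; T 0 is unused) *)
Definition class_T (T : nat -> R -> R) : Prop :=
  forall k, (1 <= k)%nat ->
    T k 0 = 1 /\
    limit1_in (T k) (fun x => 0 <= x) (T k 0) 0 /\
    (forall x, 0 < x -> 0 < T k x <= 1) /\
    (forall x, 0 < x -> T (S k) x < T k x) /\
    exists dT : R -> R, forall x, 0 < x ->
      derivable_pt_lim (T k) x (dT x) /\ dT x < 0 /\ continuity_pt dT x.

(* start of the period during which Player II holds k units:
   0 for k = m, eta_(k+1) otherwise *)
Definition prev_moment (m : nat) (eta : nat -> R) (k : nat) : R :=
  if Nat.eqb k m then 0 else eta (S k).

(* eta is the play of Player II's T-strategy against alpha:
   holding k units, he acts at the first moment t with t >= T_k(alpha(t)) *)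
Definition T_response_II (T : nat -> R -> R) (m : nat) (alpha : R -> R)
           (eta : nat -> R) : Prop :=
  forall k, (1 <= k <= m)%nat ->
    prev_moment m eta k <= eta k /\
    T k (alpha (eta k)) <= eta k /\
    (forall t, prev_moment m eta k <= t < eta k -> t < T k (alpha t)).

(* alpha is the play of Player I's T-strategy against eta: while Player II
   holds k units, alpha(t) is the largest x <= (resource at the start of the
   period) with T_k(x) >= t, i.e. alpha is kept constant while t < T_k(alpha)
   and then follows the curve t = T_k(alpha) (intensity -1/T_k'(alpha)). *)
Definition T_response_I (T : nat -> R -> R) (a : R) (m : nat) (eta : nat -> R)
           (alpha : R -> R) : Prop :=
  alpha 0 = a /\
  forall k, (1 <= k <= m)%nat ->
    forall t, prev_moment m eta k <= t <= eta k ->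
      0 <= alpha t <= alpha (prev_moment m eta k) /\
      t <= T k (alpha t) /\
      (forall x, alpha t < x <= alpha (prev_moment m eta k) -> T k x < t).

From Stdlib Require Import Reals Lra Lia List Classical ClassicalEpsilon ZArith.
Open Scope R_scope.

(* Write miss_II k x = prod_{i<=k} (1 - P2(T_i x)) and
   value k x = (A1 + A2) miss_II k x - A2.  The hypothesis of the theorem
   says 1 - miss_II k x = exp(\int_0^x log(1 - P1(T_k))), hence
   1 - miss_II k x = (1 - miss_II k y) exp(\int_y^x log(1 - P1(T_k))).
   One round of the payoff recursion Kpay with continuation value w is
   A1 - (A1 + A2) (1 - f) (1 - (1 - P2 e) w), where 1 - f is the probability
   that Player I has not succeeded before Player II's action moment e.  So,
   by induction on the number of units of Player II, both inequalities of the
   saddle point reduce to comparing 1 - f with the ratio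
   (1 - miss_II k x)/(1 - miss_II k y) of the resources x, y of Player I at
   the start of the period and at e.  Now 1 - f = exp(-\int log(1 - P1) dalpha)
   is a Riemann--Stieltjes integral, and the comparison follows from a change
   of variables z = alpha(t) against the curve t = T_k(z): Player II acting on
   the curve sees Player I behind it (upper bound), Player I consuming along
   the curve is never behind it (lower bound). *)

(* A chain issued from c is a list [(x1,y1); (x2,y2); ...]
   read as the consecutive intervals [c,x1], [x1,x2], ... with tags y_i;
   chain P c l says that every interval (left end, right end, tag) satisfies
   P, and chain_sum F c l adds F over the intervals. *)
Fixpoint chain_sum (F : R -> R -> R -> R) (c : R) (l : list (R * R)) : R :=
  match l with nil => 0 | (x, y) :: r => F c x y + chain_sum F x r end.

Fixpoint chain (P : R -> R -> R -> Prop) (c : R) (l : list (R * R)) : Prop :=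
  match l with nil => True | (x, y) :: r => P c x y /\ chain P x r end.

Fixpoint chain_end (c : R) (l : list (R * R)) : R :=
  match l with nil => c | (x, _) :: r => chain_end x r end.

Lemma chain_sum_app F c l1 l2 :
  chain_sum F c (l1 ++ l2) = chain_sum F c l1 + chain_sum F (chain_end c l1) l2.
Proof. revert c; induction l1 as [|[x y] r IH]; intros c; simpl; [lra|rewrite IH; lra]. Qed.

Lemma chain_end_app c l1 l2 : chain_end c (l1 ++ l2) = chain_end (chain_end c l1) l2.
Proof. revert c; induction l1 as [|[x y] r IH]; intros c; simpl; auto. Qed.

Lemma chain_app P c l1 l2 :
  chain P c l1 -> chain P (chain_end c l1) l2 -> chain P c (l1 ++ l2).
Proof.
  revert c; induction l1 as [|[x y] r IH]; intros c; simpl; [tauto|].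
  intros [H1 H2] H3; split; auto.
Qed.

Lemma chain_impl (P Q : R -> R -> R -> Prop) c l :
  (forall c x y, P c x y -> Q c x y) -> chain P c l -> chain Q c l.
Proof. intros H; revert c; induction l as [|[x y] r IH]; intros c; simpl; firstorder. Qed.

Lemma chain_sum_le F G c l P : chain P c l ->
  (forall c x y, P c x y -> F c x y <= G c x y) -> chain_sum F c l <= chain_sum G c l.
Proof.
  intros Hc H; revert c Hc; induction l as [|[x y] r IH]; intros c Hc; simpl in *; [lra|].
  destruct Hc as [H1 H2]; specialize (H _ _ _ H1); specialize (IH _ H2); lra.
Qed.

Lemma chain_sum_ext F G c l P : chain P c l ->
  (forall c x y, P c x y -> F c x y = G c x y) -> chain_sum F c l = chain_sum G c l.
Proof. intros Hc H; apply Rle_antisym; eapply chain_sum_le; eauto; intros; rewrite H; auto; lra. Qed.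

Lemma chain_sum_lin (F G : R -> R -> R -> R) (a b c : R) l :
  chain_sum (fun c x y => a * F c x y + b * G c x y) c l
  = a * chain_sum F c l + b * chain_sum G c l.
Proof. revert c; induction l as [|[x y] r IH]; intros c; simpl; [ring|rewrite IH; ring]. Qed.

Lemma chain_sum_zero c l : chain_sum (fun _ _ _ => 0) c l = 0.
Proof. revert c; induction l as [|[x y] r IH]; intros c; simpl; [|rewrite IH]; ring. Qed.

Lemma chain_sum_tele (g : R -> R) c l :
  chain_sum (fun c x y => g c - g x) c l = g c - g (chain_end c l).
Proof. revert c; induction l as [|[x y] r IH]; intros c; simpl; [lra|rewrite IH; lra]. Qed.

Lemma chain_bounds P c l : chain P c l -> (forall c x y, P c x y -> c < x) ->
  c <= chain_end c l /\
  chain (fun c' x y => P c' x y /\ c <= c' /\ x <= chain_end c l) c l.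
Proof.
  intros Hc HP; revert c Hc; induction l as [|[x y] r IH]; intros c Hc; simpl in *.
  - split; [lra|auto].
  - destruct Hc as [H1 H2]. specialize (HP _ _ _ H1). destruct (IH _ H2) as [IH1 IH2].
    split; [lra|]. split; [split; [auto|split; lra]|].
    eapply chain_impl; [|exact IH2]. simpl; intros ? ? ? [? [? ?]]; repeat split; auto; lra.
Qed.

Lemma chain_first_le_end c x y r P : chain P c ((x, y) :: r) ->
  (forall c x y, P c x y -> c < x) -> x <= chain_end c ((x, y) :: r).
Proof. intros [H1 H2] HP. simpl. exact (proj1 (chain_bounds _ _ _ H2 HP)). Qed.

Definition stieltjes_sum (h g : R -> R) : R -> list (R * R) -> R :=
  chain_sum (fun c x y => h y * (g x - g c)).

Definition unif_cont (h : R -> R) (s u : R) : Prop :=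
  forall eps, 0 < eps -> exists d, 0 < d /\ forall a b, s <= a <= u -> s <= b <= u ->
    Rabs (a - b) < d -> Rabs (h a - h b) < eps.

Definition nonincreasing_on (g : R -> R) (s u : R) : Prop :=
  forall p q, s <= p -> p <= q -> q <= u -> g q <= g p.

Lemma unif_cont_sub f s u s' u' : unif_cont f s u -> s <= s' -> u' <= u -> unif_cont f s' u'.
Proof.
  intros H ? ? eps Heps. destruct (H eps Heps) as [d [Hd H']]. exists d; split; auto.
  intros; apply H'; auto; lra.
Qed.

Lemma unif_cont_ext f g s u :
  (forall t, s <= t <= u -> f t = g t) -> unif_cont f s u -> unif_cont g s u.
Proof.
  intros He H eps Heps. destruct (H eps Heps) as [d [Hd H']]. exists d; split; auto.
  intros. rewrite <- !He by auto. auto.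
Qed.

Lemma nonincreasing_sub g s u s' u' :
  nonincreasing_on g s u -> s <= s' -> u' <= u -> nonincreasing_on g s' u'.
Proof. intros H ? ? p q ? ? ?; apply H; lra. Qed.

Definition fine_step (d s u : R) (c x y : R) : Prop :=
  c < x /\ Rabs (y - c) < d /\ Rabs (y - x) < d /\ s <= y <= u.

Lemma fine_step_lt d s u c x y : fine_step d s u c x y -> c < x.
Proof. intros [H _]; exact H. Qed.

Lemma fine_step_shift d s u c p q y :
  fine_step d s u c q y -> c < p -> p < q -> fine_step d s u p q y.
Proof.
  intros [Hcq [Hc [Hq Hy]]] Hcp Hpq. repeat split; try lra; auto.
  unfold Rabs in *; repeat destruct Rcase_abs; lra.
Qed.

Lemma fine_chain_end_gt d s u c x y r :
  chain (fine_step d s u) c ((x, y) :: r) -> c < chain_end c ((x, y) :: r).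
Proof.
  intros Hc. pose proof (chain_first_le_end _ _ _ _ _ Hc (fine_step_lt d s u)).
  destruct Hc as [[Hcx _] _]. lra.
Qed.

Lemma abs_step (a b d S1 S2 e : R) :
  Rabs (a - b) <= e -> d <= 0 ->
  Rabs ((a * d + S1) - (b * d + S2)) <= e * (- d) + Rabs (S1 - S2).
Proof.
  intros H Hd. replace ((a * d + S1) - (b * d + S2)) with ((a - b) * d + (S1 - S2)) by ring.
  eapply Rle_trans; [apply Rabs_triang|]. rewrite Rabs_mult.
  rewrite (Rabs_left1 d Hd). apply Rplus_le_compat_r. apply Rmult_le_compat_r; lra.
Qed.

(* This is the
   Cauchy estimate behind the existence of the Stieltjes integral. *)
Section FineSums.
Variables (h g : R -> R) (s u d e : R).
Hypothesis h_osc : forall a b, s <= a <= u -> s <= b <= u -> Rabs (a - b) < 2 * d ->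
  Rabs (h a - h b) <= e.
Hypothesis g_mon : nonincreasing_on g s u.

Definition sums_close (n : nat) : Prop :=
  forall c l1 l2, (length l1 + length l2 <= n)%nat -> s <= c ->
  chain (fine_step d s u) c l1 -> chain (fine_step d s u) c l2 ->
  chain_end c l1 = u -> chain_end c l2 = u ->
  Rabs (stieltjes_sum h g c l1 - stieltjes_sum h g c l2) <= e * (g c - g u).

(* Inductive step: when the first point p of l1 comes first, compare l1
   with l2 re-issued from p. *)
Lemma sums_close_head n c p yp r1 q yq r2 : sums_close n -> p <= q ->
  (length r1 + S (length r2) <= n)%nat -> s <= c ->
  chain (fine_step d s u) c ((p, yp) :: r1) -> chain (fine_step d s u) c ((q, yq) :: r2) ->
  chain_end c ((p, yp) :: r1) = u -> chain_end c ((q, yq) :: r2) = u ->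
  Rabs (stieltjes_sum h g c ((p, yp) :: r1) - stieltjes_sum h g c ((q, yq) :: r2))
  <= e * (g c - g u).
Proof.
  intros IH Hpq Hlen Hc C1 C2 E1 E2.
  pose proof (chain_first_le_end _ _ _ _ _ C1 (fine_step_lt d s u)) as Hpu.
  rewrite E1 in Hpu.
  destruct C1 as [[Hcp [Hp1 [Hp2 Hp3]]] C1]. destruct C2 as [F2 C2].
  pose proof F2 as [Hcq [Hq1 [Hq2 Hq3]]].
  simpl in E1, E2. unfold stieltjes_sum; simpl; fold (stieltjes_sum h g).
  assert (Hyy : Rabs (h yp - h yq) <= e).
  { apply h_osc; try lra. unfold Rabs in *.
    destruct (Rcase_abs (yp - c)); destruct (Rcase_abs (yq - c));
      destruct (Rcase_abs (yp - yq)); lra. }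
  assert (g p <= g c) by (apply g_mon; lra). assert (g u <= g p) by (apply g_mon; lra).
  destruct (Req_dec p q) as [<-|Hne].
  - assert (IH' := IH p r1 r2 ltac:(lia) ltac:(lra) C1 C2 E1 E2).
    eapply Rle_trans; [apply abs_step; [exact Hyy|lra]|]. lra.
  - assert (C2' : chain (fine_step d s u) p ((q, yq) :: r2)).
    { split; [apply (fine_step_shift _ _ _ c); auto; lra|exact C2]. }
    assert (IH' := IH p r1 ((q, yq) :: r2) ltac:(simpl; lia) ltac:(lra) C1 C2' E1 E2).
    unfold stieltjes_sum in IH'; simpl in IH'; fold (stieltjes_sum h g) in IH'.
    replace (h yq * (g q - g c) + stieltjes_sum h g q r2) with
      (h yq * (g p - g c) + (h yq * (g q - g p) + stieltjes_sum h g q r2)) by ring.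
    eapply Rle_trans; [apply abs_step; [exact Hyy|lra]|]. lra.
Qed.

Lemma sums_close_all n : sums_close n.
Proof.
  induction n as [|n IH]; intros c l1 l2 Hlen Hc C1 C2 E1 E2.
  all: destruct l1 as [|[p yp] r1]; destruct l2 as [|[q yq] r2].
  all: try (simpl in Hlen; lia).
  all: try (simpl in E1; pose proof (fine_chain_end_gt _ _ _ _ _ _ _ C2); lra).
  all: try (simpl in E2; pose proof (fine_chain_end_gt _ _ _ _ _ _ _ C1); lra).
  all: try (simpl in *; rewrite E1, Rminus_diag, Rabs_R0; lra).
  simpl in Hlen. destruct (Rle_lt_dec p q) as [Hpq|Hqp].
  - apply (sums_close_head n); auto; lia.
  - rewrite Rabs_minus_sym. apply (sums_close_head n); auto; [lra|lia].
Qed.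
End FineSums.

Definition tagged_step (d : R) (c x y : R) : Prop := c < x /\ c <= y <= x /\ x - c < d.

Lemma tagged_step_lt d c x y : tagged_step d c x y -> c < x.
Proof. intros [H _]; exact H. Qed.

Lemma tagged_chain_weaken d d' c l : d <= d' -> chain (tagged_step d) c l -> chain (tagged_step d') c l.
Proof. intros Hd. apply chain_impl. intros c0 x y [? [? ?]]; repeat split; lra. Qed.

Definition inside_step (s u d : R) (c x y : R) : Prop :=
  c < x /\ c <= y <= x /\ x - c < d /\ s <= c /\ x <= u.

Lemma tagged_chain_inside s u d l :
  chain (tagged_step d) s l -> chain_end s l = u -> chain (inside_step s u d) s l.
Proof.
  intros H E. destruct (chain_bounds _ _ _ H (tagged_step_lt d)) as [_ H2]. rewrite E in H2.
  eapply chain_impl; [|exact H2]. intros c x y [[? [? ?]] [? ?]]. unfold inside_step; repeat split; lra.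
Qed.

Lemma inside_chain_end_le s u d c l :
  chain (inside_step s u d) c l -> c <= u -> chain_end c l <= u.
Proof.
  revert c; induction l as [|[x y] r IH]; intros c Cc Hc; simpl in *; auto.
  destruct Cc as [[? [? [? [? ?]]]] Cc]. apply IH; auto.
Qed.

Lemma tagged_chain_fine d s u l :
  chain (tagged_step d) s l -> chain_end s l = u -> chain (fine_step d s u) s l.
Proof.
  intros H E. eapply chain_impl; [|exact (tagged_chain_inside s u d l H E)].
  intros c x y [H1 [H2 [H3 [H4 H5]]]]. unfold fine_step.
  repeat split; try lra; unfold Rabs; destruct Rcase_abs; lra.
Qed.

Definition is_chain_integral (h g : R -> R) (s u I : R) : Prop :=
  forall eps, 0 < eps -> exists d, 0 < d /\
    forall l, chain (tagged_step d) s l -> chain_end s l = u ->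
      Rabs (stieltjes_sum h g s l - I) < eps.

Lemma uniform_step_small s u d : s < u -> 0 < d ->
  exists N, forall n, (N <= n)%nat -> 0 < (u - s) / INR (S n) < d.
Proof.
  intros Hsu Hd. destruct (archimed ((u - s) / d)) as [H1 _].
  assert (0 < (u - s) / d) by (apply Rdiv_lt_0_compat; lra).
  assert (0 <= up ((u - s) / d))%Z by (apply le_IZR; lra).
  exists (Z.to_nat (up ((u - s) / d))). intros n Hn.
  assert (Hn' : IZR (up ((u - s) / d)) <= INR n).
  { rewrite <- (Z2Nat.id (up ((u - s) / d))) by lia. rewrite <- INR_IZR_INZ. apply le_INR; auto. }
  assert (0 < INR (S n)) by (apply lt_0_INR; lia).
  split; [apply Rdiv_lt_0_compat; lra|].
  apply (Rmult_lt_reg_r (INR (S n))); auto. unfold Rdiv. rewrite Rmult_assoc, Rinv_l by lra.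
  rewrite S_INR. apply (Rmult_lt_reg_r (/ d)); [apply Rinv_0_lt_compat; lra|].
  replace (d * (INR n + 1) * / d) with (INR n + 1) by (field; lra).
  rewrite Rmult_1_r. unfold Rdiv in H1. lra.
Qed.

Fixpoint uniform_chain (c w : R) (n : nat) : list (R * R) :=
  match n with O => nil | S n => (c + w, c) :: uniform_chain (c + w) w n end.

Lemma uniform_chain_end c w n : chain_end c (uniform_chain c w n) = c + INR n * w.
Proof.
  revert c; induction n as [|n IH]; intros c; simpl uniform_chain; simpl chain_end; [simpl; ring|].
  rewrite IH, S_INR; ring.
Qed.

Lemma uniform_chain_tagged d c w n : 0 < w < d -> chain (tagged_step d) c (uniform_chain c w n).
Proof.
  intros Hw; revert c; induction n as [|n IH]; intros c; simpl; auto.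
  split; [unfold tagged_step; repeat split; lra|apply IH].
Qed.

Definition subdivision (s u : R) (n : nat) : list (R * R) :=
  uniform_chain s ((u - s) / INR (S n)) (S n).

Lemma subdivision_end s u n : chain_end s (subdivision s u n) = u.
Proof. unfold subdivision; rewrite uniform_chain_end. field. apply not_0_INR; lia. Qed.

Lemma subdivision_fine s u d : s < u -> 0 < d ->
  exists N, forall n, (N <= n)%nat -> chain (tagged_step d) s (subdivision s u n).
Proof.
  intros Hsu Hd. destruct (uniform_step_small s u d Hsu Hd) as [N HN].
  exists N. intros n Hn. apply uniform_chain_tagged, HN, Hn.
Qed.

Lemma tagged_chain_exists s u d : s < u -> 0 < d ->
  exists l, chain (tagged_step d) s l /\ chain_end s l = u.
Proof.
  intros H1 H2. destruct (subdivision_fine s u d H1 H2) as [N HN].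
  exists (subdivision s u N). split; auto using subdivision_end.
Qed.

(* Existence: for h uniformly continuous and g nonincreasing, the sums along
   the subdivisions form a Cauchy sequence whose limit is the integral. *)
Section Existence.
Variables (h g : R -> R) (s u : R).
Hypothesis Hsu : s < u.
Hypothesis Huc : unif_cont h s u.
Hypothesis Hmon : nonincreasing_on g s u.

Lemma tagged_sums_close : forall eps, 0 < eps -> exists d, 0 < d /\ forall l1 l2,
  chain (tagged_step d) s l1 -> chain_end s l1 = u ->
  chain (tagged_step d) s l2 -> chain_end s l2 = u ->
  Rabs (stieltjes_sum h g s l1 - stieltjes_sum h g s l2) < eps.
Proof.
  intros eps He. assert (HV : g u <= g s) by (apply Hmon; lra).
  set (e' := eps / (g s - g u + 1)).
  assert (He' : 0 < e') by (unfold e'; apply Rdiv_lt_0_compat; lra).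
  destruct (Huc e' He') as [d0 [Hd0 Hd]].
  exists (d0 / 2). split; [lra|]. intros l1 l2 C1 E1 C2 E2.
  assert (Hosc : forall a b, s <= a <= u -> s <= b <= u -> Rabs (a - b) < 2 * (d0 / 2) ->
    Rabs (h a - h b) <= e') by (intros a b Ha Hb Hab; left; apply Hd; auto; lra).
  eapply Rle_lt_trans.
  - apply (sums_close_all h g s u (d0 / 2) e' Hosc Hmon (length l1 + length l2));
      auto; try lra; apply tagged_chain_fine; auto.
  - assert (e' * (g s - g u + 1) = eps) by (unfold e'; field; lra). nra.
Qed.

Lemma chain_integral_exists : exists I, is_chain_integral h g s u I.
Proof.
  set (a := fun n => stieltjes_sum h g s (subdivision s u n)).
  assert (Hc : Cauchy_crit a).
  { intros eps He. destruct (tagged_sums_close eps He) as [d [Hd H]].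
    destruct (subdivision_fine s u d Hsu Hd) as [N HN]. exists N. intros n m Hn Hm.
    unfold R_dist, a. apply H; auto using subdivision_end. }
  destruct (R_complete a Hc) as [I HI]. exists I.
  intros eps He. destruct (tagged_sums_close (eps / 2) ltac:(lra)) as [d [Hd H]].
  exists d. split; auto. intros l C E.
  destruct (subdivision_fine s u d Hsu Hd) as [N1 HN1].
  destruct (HI (eps / 2) ltac:(lra)) as [N2 HN2].
  specialize (HN1 (max N1 N2) ltac:(lia)). specialize (HN2 (max N1 N2) ltac:(lia)).
  unfold R_dist, a in HN2. specialize (H l _ C E HN1 (subdivision_end s u _)).
  apply Rabs_def2 in H. apply Rabs_def2 in HN2. apply Rabs_def1; lra.
Qed.
End Existence.

Fixpoint partition_chain (x y : nat -> R) (N : nat) : list (R * R) :=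
  match N with O => nil | S n => partition_chain x y n ++ ((x (S n), y n) :: nil) end.

Lemma partition_chain_end x y N : chain_end (x O) (partition_chain x y N) = x N.
Proof. induction N as [|N IH]; simpl; auto. rewrite chain_end_app, IH. reflexivity. Qed.

Lemma partition_chain_sum h g x y N :
  stieltjes_sum h g (x O) (partition_chain x y N) = RS_sum h g N x y.
Proof.
  induction N as [|N IH]; simpl; auto. unfold stieltjes_sum in *.
  rewrite chain_sum_app, IH, partition_chain_end. simpl. unfold RS_sum. simpl. ring.
Qed.

Lemma partition_chain_tagged d x y N :
  (forall i, (i < N)%nat -> x i < x (S i) /\ x i <= y i <= x (S i)) ->
  (forall i, (i < N)%nat -> x (S i) - x i < d) -> chain (tagged_step d) (x O) (partition_chain x y N).
Proof.
  induction N as [|N IH]; intros H1 H2; simpl; auto. apply chain_app.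
  - apply IH; intros; [apply H1|apply H2]; lia.
  - rewrite partition_chain_end. simpl. split; auto. destruct (H1 N ltac:(lia)).
    specialize (H2 N ltac:(lia)). unfold tagged_step; repeat split; lra.
Qed.

Lemma chain_integral_is_RS h g s u I : is_chain_integral h g s u I -> is_RS_integral h g s u I.
Proof.
  intros H eps He. destruct (H eps He) as [d [Hd H']]. exists d. split; auto.
  intros N x y [H0 [HN Hi]] Hm. rewrite <- partition_chain_sum, H0. apply H'.
  - rewrite <- H0. apply partition_chain_tagged; auto.
  - rewrite <- H0, partition_chain_end. auto.
Qed.

Lemma uniform_partition s u d : s < u -> 0 < d -> exists N x,
  tagged_partition s u N x x /\ forall i, (i < N)%nat -> x (S i) - x i < d.
Proof.
  intros Hsu Hd. destruct (uniform_step_small s u d Hsu Hd) as [N HN].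
  specialize (HN N (le_n N)). set (w := (u - s) / INR (S N)) in HN.
  exists (S N), (fun i => s + INR i * w). split.
  - split; [simpl; ring|split]; [unfold w; field; apply not_0_INR; lia|].
    intros i Hi. rewrite S_INR. split; nra.
  - intros i _. rewrite S_INR. lra.
Qed.

Lemma RS_integral_unique h g s u I1 I2 : s < u ->
  is_RS_integral h g s u I1 -> is_RS_integral h g s u I2 -> I1 = I2.
Proof.
  intros Hsu H1 H2. apply NNPP; intro Hne.
  assert (He : 0 < Rabs (I1 - I2) / 2) by (assert (I1 - I2 <> 0) by lra; apply Rabs_pos_lt in H; lra).
  destruct (H1 _ He) as [d1 [Hd1 G1]]. destruct (H2 _ He) as [d2 [Hd2 G2]].
  destruct (uniform_partition s u (Rmin d1 d2) Hsu (Rmin_pos _ _ Hd1 Hd2)) as [N [x [TP Hmesh]]].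
  specialize (G1 N x x TP (fun i Hi => Rlt_le_trans _ _ _ (Hmesh i Hi) (Rmin_l _ _))).
  specialize (G2 N x x TP (fun i Hi => Rlt_le_trans _ _ _ (Hmesh i Hi) (Rmin_r _ _))).
  apply Rabs_def2 in G1. apply Rabs_def2 in G2.
  unfold Rabs in *; destruct Rcase_abs; lra.
Qed.

Lemma RS_int_chain h g s u : s < u -> unif_cont h s u -> nonincreasing_on g s u ->
  is_chain_integral h g s u (RS_int h g s u).
Proof.
  intros Hsu Huc Hm. destruct (chain_integral_exists h g s u Hsu Huc Hm) as [I HI].
  assert (Hex : exists I, is_RS_integral h g s u I) by (exists I; apply chain_integral_is_RS; auto).
  unfold RS_int. pose proof (epsilon_spec (inhabits 0) _ Hex) as He.
  replace (epsilon (inhabits 0) (is_RS_integral h g s u)) with I; auto.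
  apply RS_integral_unique with h g s u; auto. apply chain_integral_is_RS; auto.
Qed.

Lemma chain_integral_approx h g s u I : s < u -> is_chain_integral h g s u I ->
  forall eps d, 0 < eps -> 0 < d -> exists l, chain (tagged_step d) s l /\
    chain_end s l = u /\ Rabs (stieltjes_sum h g s l - I) < eps.
Proof.
  intros Hsu HI eps d He Hd. destruct (HI eps He) as [d1 [Hd1 H]].
  destruct (tagged_chain_exists s u (Rmin d d1) Hsu (Rmin_pos _ _ Hd Hd1)) as [l [Cl El]].
  exists l. split; [|split; auto]; [|apply H; auto]; eapply tagged_chain_weaken; eauto;
    [apply Rmin_l|apply Rmin_r].
Qed.

Lemma chain_integral_eq h g s u I K : is_chain_integral h g s u I ->
  (forall eps d, 0 < eps -> 0 < d -> exists l, chain (tagged_step d) s l /\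
     chain_end s l = u /\ Rabs (stieltjes_sum h g s l - K) < eps) -> I = K.
Proof.
  intros HI HK. apply NNPP; intro Hne.
  assert (He : 0 < Rabs (I - K) / 2) by (assert (I - K <> 0) by lra; apply Rabs_pos_lt in H; lra).
  destruct (HI _ He) as [d [Hd G]]. destruct (HK _ d He Hd) as [l [Cl [El Hl]]].
  specialize (G l Cl El). apply Rabs_def2 in G. apply Rabs_def2 in Hl.
  unfold Rabs in *; destruct Rcase_abs; lra.
Qed.

Lemma chain_integral_le h g s u I K : s < u -> is_chain_integral h g s u I ->
  (forall eps, 0 < eps -> exists d, 0 < d /\ forall l, chain (tagged_step d) s l ->
     chain_end s l = u -> stieltjes_sum h g s l <= K + eps) -> I <= K.
Proof.
  intros Hsu HI HK. apply Rnot_lt_le; intro Hlt.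
  destruct (HK ((I - K) / 3) ltac:(lra)) as [d [Hd G]].
  destruct (chain_integral_approx h g s u I Hsu HI ((I - K) / 3) d ltac:(lra) Hd) as [l [Cl [El Hl]]].
  specialize (G l Cl El). apply Rabs_def2 in Hl. lra.
Qed.

Lemma chain_integral_ge h g s u I K : s < u -> is_chain_integral h g s u I ->
  (forall eps, 0 < eps -> exists d, 0 < d /\ forall l, chain (tagged_step d) s l ->
     chain_end s l = u -> K - eps <= stieltjes_sum h g s l) -> K <= I.
Proof.
  intros Hsu HI HK. apply Rnot_lt_le; intro Hlt.
  destruct (HK ((K - I) / 3) ltac:(lra)) as [d [Hd G]].
  destruct (chain_integral_approx h g s u I Hsu HI ((K - I) / 3) d ltac:(lra) Hd) as [l [Cl [El Hl]]].
  specialize (G l Cl El). apply Rabs_def2 in Hl. lra.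
Qed.

Lemma tagged_partition_point s N x y : tagged_partition s s N x y -> N = 0%nat.
Proof.
  intros [H0 [HN Hi]]. destruct N as [|N]; auto. exfalso.
  assert (Hinc : forall i, (1 <= i <= S N)%nat -> x O < x i).
  { induction i as [|i IH]; intros Hi'; [lia|].
    destruct (Hi i ltac:(lia)) as [Hlt _].
    destruct (Nat.eq_dec i 0) as [->|]; [lra|]. specialize (IH ltac:(lia)). lra. }
  specialize (Hinc (S N) ltac:(lia)). lra.
Qed.

Lemma RS_int_point h g s : RS_int h g s s = 0.
Proof.
  assert (Hzero : forall I, is_RS_integral h g s s I -> I = 0).
  { intros I HI. apply NNPP; intro Hne.
    destruct (HI (Rabs I) (Rabs_pos_lt _ Hne)) as [d [Hd G]].
    specialize (G O (fun _ => s) (fun _ => s)). unfold RS_sum in G; simpl in G.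
    rewrite Rminus_0_l, Rabs_Ropp in G.
    assert (Rabs I < Rabs I); [|lra].
    apply G; [split; [auto|split; [auto|intros; lia]]|intros; lia]. }
  apply Hzero, (epsilon_spec (inhabits 0) (is_RS_integral h g s s)).
  exists 0. intros eps He. exists 1. split; [lra|]. intros N x y HP _.
  rewrite (tagged_partition_point s N x y HP). unfold RS_sum; simpl.
  rewrite Rminus_0_r, Rabs_R0; lra.
Qed.

Lemma RS_int_split h g s m u : s <= m -> m <= u -> unif_cont h s u -> nonincreasing_on g s u ->
  RS_int h g s u = RS_int h g s m + RS_int h g m u.
Proof.
  intros Hsm Hmu Huc Hmon.
  destruct (Req_dec s m) as [<-|Hsm']; [rewrite RS_int_point; ring|].
  destruct (Req_dec m u) as [->|Hmu']; [rewrite (RS_int_point h g u); ring|].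
  apply (chain_integral_eq h g s u); [apply RS_int_chain; auto; lra|].
  intros eps d He Hd.
  destruct (chain_integral_approx h g s m _ ltac:(lra)
    (RS_int_chain h g s m ltac:(lra) (unif_cont_sub h s u s m Huc ltac:(lra) ltac:(lra))
       (nonincreasing_sub g s u s m Hmon ltac:(lra) ltac:(lra))) (eps / 2) d ltac:(lra) Hd)
    as [l1 [C1 [E1 H1]]].
  destruct (chain_integral_approx h g m u _ ltac:(lra)
    (RS_int_chain h g m u ltac:(lra) (unif_cont_sub h s u m u Huc ltac:(lra) ltac:(lra))
       (nonincreasing_sub g s u m u Hmon ltac:(lra) ltac:(lra))) (eps / 2) d ltac:(lra) Hd)
    as [l2 [C2 [E2 H2]]].
  exists (l1 ++ l2). split; [apply chain_app; rewrite ?E1; auto|].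
  rewrite chain_end_app, E1. split; auto.
  unfold stieltjes_sum; rewrite chain_sum_app, E1; fold (stieltjes_sum h g).
  apply Rabs_def2 in H1. apply Rabs_def2 in H2. apply Rabs_def1; lra.
Qed.

Lemma stieltjes_sum_abs h g M c l (P : R -> R -> R -> Prop) : chain P c l ->
  (forall c x y, P c x y -> g x <= g c /\ Rabs (h y) <= M) ->
  Rabs (stieltjes_sum h g c l) <= M * (g c - g (chain_end c l)).
Proof.
  intros Ci HP. unfold stieltjes_sum. revert c Ci. induction l as [|[x y] r IH]; intros c Ci; simpl.
  - rewrite Rabs_R0; lra.
  - destruct Ci as [H1 Ci]. destruct (HP _ _ _ H1) as [Hg Hh].
    eapply Rle_trans; [apply Rabs_triang|]. specialize (IH x Ci).
    rewrite Rabs_mult, (Rabs_left1 (g x - g c)) by lra. assert (0 <= Rabs (h y)) by apply Rabs_pos.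
    assert (Rabs (h y) * - (g x - g c) <= M * (g c - g x)) by nra. lra.
Qed.

Section Bounds.
Variables (h g : R -> R) (s u : R).
Hypothesis Hsu : s < u.
Hypothesis Huc : unif_cont h s u.
Hypothesis Hmon : nonincreasing_on g s u.

Lemma RS_int_nonneg : (forall t, s <= t <= u -> h t <= 0) -> 0 <= RS_int h g s u.
Proof.
  intros Hh. apply (chain_integral_ge h g s u); auto using RS_int_chain. intros eps He.
  exists 1. split; [lra|]. intros l Cl El.
  assert (0 <= stieltjes_sum h g s l); [|lra].
  rewrite <- (chain_sum_zero s l).
  eapply chain_sum_le; [apply (tagged_chain_inside s u 1 l Cl El)|].
  intros c x y [? [? [? [? ?]]]]. assert (g x <= g c) by (apply Hmon; lra).
  assert (h y <= 0) by (apply Hh; lra). nra.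
Qed.

Lemma RS_int_abs M : (forall t, s <= t <= u -> Rabs (h t) <= M) ->
  Rabs (RS_int h g s u) <= M * (g s - g u).
Proof.
  intros Hh. assert (HL := RS_int_chain h g s u Hsu Huc Hmon).
  assert (key : forall l d, chain (tagged_step d) s l -> chain_end s l = u ->
     Rabs (stieltjes_sum h g s l) <= M * (g s - g u)).
  { intros l d Cl El. rewrite <- El. eapply stieltjes_sum_abs; [apply (tagged_chain_inside s u d l Cl El)|].
    intros c x y [? [? [? [? ?]]]]. split; [apply Hmon; lra|apply Hh; lra]. }
  apply Rabs_le. split.
  - apply (chain_integral_ge h g s u); auto. intros eps He. exists 1; split; [lra|].
    intros l Cl El. specialize (key l 1 Cl El). unfold Rabs in key; destruct Rcase_abs; lra.
  - apply (chain_integral_le h g s u); auto. intros eps He. exists 1; split; [lra|].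
    intros l Cl El. specialize (key l 1 Cl El). unfold Rabs in key; destruct Rcase_abs; lra.
Qed.
End Bounds.

Lemma RS_int_const_integrator h g s u : s <= u -> unif_cont h s u ->
  (forall t, s <= t <= u -> g t = g s) -> RS_int h g s u = 0.
Proof.
  intros Hsu Huc Hc. destruct (Req_dec s u) as [->|Hne]; [apply RS_int_point|].
  assert (Hm : nonincreasing_on g s u) by (intros p q ? ? ?; rewrite (Hc p), (Hc q); lra).
  apply (chain_integral_eq h g s u); [apply RS_int_chain; auto; lra|].
  intros eps d He Hd. destruct (tagged_chain_exists s u d ltac:(lra) Hd) as [l [Cl El]].
  exists l. split; [auto|split; [auto|]].
  replace (stieltjes_sum h g s l) with (chain_sum (fun _ _ _ => 0) s l).
  - rewrite chain_sum_zero, Rminus_0_r, Rabs_R0; lra.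
  - apply chain_sum_ext with (P := inside_step s u d); [apply tagged_chain_inside; auto|].
    intros c x y [? [? [? [? ?]]]]. rewrite (Hc x), (Hc c) by lra. ring.
Qed.

Lemma Rint_eq f a b (pr : Riemann_integrable f a b) : Rint f a b = RiemannInt pr.
Proof.
  unfold Rint. destruct (excluded_middle_informative _) as [H|H].
  - apply RiemannInt_P5.
  - exfalso; apply H; exact (inhabits pr).
Qed.

Definition cont_on (f : R -> R) (a b : R) : Prop := forall x, a <= x <= b -> continuity_pt f x.

Lemma cont_on_sub f a b a' b' : cont_on f a b -> a <= a' -> b' <= b -> cont_on f a' b'.
Proof. intros H ? ? x ?; apply H; lra. Qed.

Lemma Rint_point f a : Rint f a a = 0.
Proof. rewrite (Rint_eq f a a (RiemannInt_P7 f a)). apply RiemannInt_P9. Qed.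

Lemma Rint_chasles f a b c : a <= b -> b <= c -> cont_on f a c ->
  Rint f a b + Rint f b c = Rint f a c.
Proof.
  intros H1 H2 Hc.
  rewrite (Rint_eq f a b (@continuity_implies_RiemannInt f a b H1 (cont_on_sub f a c a b Hc (Rle_refl _) H2))).
  rewrite (Rint_eq f b c (@continuity_implies_RiemannInt f b c H2 (cont_on_sub f a c b c Hc H1 (Rle_refl _)))).
  rewrite (Rint_eq f a c (@continuity_implies_RiemannInt f a c (Rle_trans _ _ _ H1 H2) Hc)).
  apply RiemannInt_P26.
Qed.

Lemma Rint_bounds f a b lo hi : a <= b -> cont_on f a b ->
  (forall x, a <= x <= b -> lo <= f x <= hi) -> lo * (b - a) <= Rint f a b <= hi * (b - a).
Proof.
  intros H Hc Hb. rewrite (Rint_eq f a b (@continuity_implies_RiemannInt f a b H Hc)).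
  apply RiemannInt_const_bound; auto. intros; apply Hb; lra.
Qed.

Lemma Rint_nonpos f a b : a <= b -> cont_on f a b -> (forall z, a <= z <= b -> f z <= 0) ->
  Rint f a b <= 0.
Proof.
  intros H Hc Hf. rewrite (Rint_eq f a b (@continuity_implies_RiemannInt f a b H Hc)).
  rewrite <- (Rmult_0_l (b - a)), <- (RiemannInt_P15 (RiemannInt_P14 a b 0)).
  apply RiemannInt_P19; auto. intros; unfold fct_cte; apply Hf; lra.
Qed.

Lemma unif_cont_of_cont f a b : cont_on f a b -> unif_cont f a b.
Proof.
  intros Hc eps He. destruct (@Heine_cor2 f a b Hc (mkposreal eps He)) as [d Hd].
  exists d. split; [apply cond_pos|]. intros. apply Hd; auto.
Qed.

(* This compares the
   success probability of Player I along an arbitrary consumption function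
   with the one prescribed by the curve T_k. *)
Section ChangeOfVariables.
Variables (h g G : R -> R) (s u : R).
Hypothesis Hsu : s < u.
Hypothesis Huc : unif_cont h s u.
Hypothesis Hmon : nonincreasing_on g s u.
Hypothesis Hguc : unif_cont g s u.
Hypothesis HG : cont_on G (g u) (g s).

Lemma Rint_chain_tele d l : chain (tagged_step d) s l -> chain_end s l = u ->
  chain_sum (fun c x y => Rint G (g x) (g c)) s l = Rint G (g u) (g s).
Proof.
  intros Cl El. rewrite <- El. pose proof (tagged_chain_inside s u d l Cl El) as Ci.
  cut (forall c, s <= c <= u -> chain (inside_step s u d) c l ->
    chain_sum (fun c x y => Rint G (g x) (g c)) c l = Rint G (g (chain_end c l)) (g c));
    [intros Hc; apply Hc; auto; lra|].
  clear Cl El Ci. induction l as [|[x y] r IH]; intros c Hc Cc; simpl in *.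
  - symmetry; apply Rint_point.
  - destruct Cc as [[? [? [? [? ?]]]] Cc]. rewrite IH by (auto; lra).
    pose proof (inside_chain_end_le s u d x r Cc ltac:(lra)).
    destruct (chain_bounds _ _ _ Cc (fun c x y (H : inside_step s u d c x y) => proj1 H)) as [Hx _].
    assert (g u <= g (chain_end x r)) by (apply Hmon; lra).
    assert (g (chain_end x r) <= g x) by (apply Hmon; lra).
    assert (g x <= g c) by (apply Hmon; lra). assert (g c <= g s) by (apply Hmon; lra).
    rewrite Rplus_comm. apply Rint_chasles; auto. apply (cont_on_sub G (g u) (g s)); auto.
Qed.

Lemma step_integral_bound e : 0 < e -> exists d, 0 < d /\
  forall c x y w, inside_step s u d c x y -> g x <= w <= g c ->
    (G w - e) * (g c - g x) <= Rint G (g x) (g c) <= (G w + e) * (g c - g x).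
Proof.
  intros He. destruct (unif_cont_of_cont G _ _ HG e He) as [dG [HdG HGu]].
  destruct (Hguc dG HdG) as [d [Hd Hgd]]. exists d. split; auto.
  intros c x y w [Hcx [Hy [Hxd [Hsc Hxu]]]] Hw.
  assert (g u <= g x) by (apply Hmon; lra). assert (g c <= g s) by (apply Hmon; lra).
  assert (Hgcx : g c - g x < dG).
  { assert (Rabs (g c - g x) < dG) by (apply Hgd; try lra; unfold Rabs; destruct Rcase_abs; lra).
    unfold Rabs in *; destruct Rcase_abs; lra. }
  apply Rint_bounds; [lra|apply (cont_on_sub G (g u) (g s)); auto; lra|].
  intros z Hz. assert (Hzw : Rabs (G z - G w) < e).
  { apply HGu; try lra. unfold Rabs; destruct Rcase_abs; lra. }
  apply Rabs_def2 in Hzw. lra.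
Qed.

Lemma RS_int_change_var_lower : (forall t, s <= t <= u -> G (g t) <= h t) ->
  Rint G (g u) (g s) <= - RS_int h g s u.
Proof.
  intros Hh. assert (HL := RS_int_chain h g s u Hsu Huc Hmon).
  assert (HV : g u <= g s) by (apply Hmon; lra).
  cut (RS_int h g s u <= - Rint G (g u) (g s)); [lra|].
  apply (chain_integral_le h g s u); auto. intros eps He.
  set (e := eps / (g s - g u + 1)). assert (He' : 0 < e) by (unfold e; apply Rdiv_lt_0_compat; lra).
  assert (e * (g s - g u) <= eps).
  { assert (e * (g s - g u + 1) = eps) by (unfold e; field; lra). nra. }
  destruct (step_integral_bound e He') as [d [Hd Hstep]]. exists d. split; auto. intros l Cl El.
  assert (Hsum : stieltjes_sum h g s l <=
    chain_sum (fun c x y => -1 * Rint G (g x) (g c) + e * (g c - g x)) s l).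
  { unfold stieltjes_sum. eapply chain_sum_le; [apply (tagged_chain_inside s u d l Cl El)|].
    intros c x y Hst. pose proof Hst as [Hcx [Hy [Hxd [Hsc Hxu]]]].
    assert (g x <= g y) by (apply Hmon; lra). assert (g y <= g c) by (apply Hmon; lra).
    destruct (Hstep c x y (g y) Hst ltac:(lra)) as [_ Hhi].
    assert (G (g y) <= h y) by (apply Hh; lra). nra. }
  rewrite chain_sum_lin, (Rint_chain_tele d l Cl El), chain_sum_tele, El in Hsum. lra.
Qed.

Lemma RS_int_change_var_upper : (forall t, s <= t <= u -> g t < g s -> h t <= G (g t)) ->
  - RS_int h g s u <= Rint G (g u) (g s).
Proof.
  intros Hh. assert (HL := RS_int_chain h g s u Hsu Huc Hmon).
  assert (HV : g u <= g s) by (apply Hmon; lra).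
  cut (- Rint G (g u) (g s) <= RS_int h g s u); [lra|].
  apply (chain_integral_ge h g s u); auto. intros eps He.
  set (e := eps / (2 * (g s - g u + 1))).
  assert (He' : 0 < e) by (unfold e; apply Rdiv_lt_0_compat; lra).
  assert (2 * e * (g s - g u) <= eps).
  { assert (2 * e * (g s - g u + 1) = eps) by (unfold e; field; lra). nra. }
  destruct (step_integral_bound e He') as [d1 [Hd1 Hstep]].
  destruct (Huc e He') as [d2 [Hd2 Hhd]].
  exists (Rmin d1 d2). split; [apply Rmin_pos; auto|]. intros l Cl El.
  pose proof (Rmin_l d1 d2). pose proof (Rmin_r d1 d2).
  assert (Hsum : chain_sum (fun c x y => -1 * Rint G (g x) (g c) + (-2 * e) * (g c - g x)) s l
    <= stieltjes_sum h g s l).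
  { unfold stieltjes_sum. eapply chain_sum_le; [apply (tagged_chain_inside s u _ l Cl El)|].
    intros c x y [Hcx [Hy [Hxd [Hsc Hxu]]]].
    assert (g x <= g y) by (apply Hmon; lra). assert (g y <= g c) by (apply Hmon; lra).
    assert (g c <= g s) by (apply Hmon; lra).
    destruct (Hstep c x y (g x) ltac:(repeat split; lra) ltac:(lra)) as [Hlo _].
    destruct (Req_dec (g x) (g c)) as [Eq|Neq]; [rewrite Eq in *; nra|].
    assert (h x <= G (g x)) by (apply Hh; lra).
    assert (Hhxy : Rabs (h y - h x) < e) by (apply Hhd; try lra; unfold Rabs; destruct Rcase_abs; lra).
    apply Rabs_def2 in Hhxy. nra. }
  rewrite chain_sum_lin, (Rint_chain_tele _ l Cl El), chain_sum_tele, El in Hsum. lra.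
Qed.
End ChangeOfVariables.

Lemma limit_intro f D l x0 : (forall eps, 0 < eps -> exists alp, 0 < alp /\
   forall x, D x -> Rabs (x - x0) < alp -> Rabs (f x - l) < eps) -> limit1_in f D l x0.
Proof.
  intros H eps He. destruct (H eps He) as [a [Ha H']]. exists a. split; auto.
  intros x [Hx Hd]. simpl in *. unfold R_dist in *. auto.
Qed.

Lemma limit_elim f D l x0 : limit1_in f D l x0 -> forall eps, 0 < eps -> exists alp, 0 < alp /\
   forall x, D x -> Rabs (x - x0) < alp -> Rabs (f x - l) < eps.
Proof.
  intros H eps He. destruct (H eps He) as [a [Ha H']]. exists a. split; [exact Ha|].
  intros x Hx Hd. apply (H' x). split; auto.
Qed.

Lemma limit_unique f D l l' x0 : (forall alp, 0 < alp -> exists x, D x /\ Rabs (x - x0) < alp) ->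
  limit1_in f D l x0 -> limit1_in f D l' x0 -> l = l'.
Proof.
  intros Ha H1 H2. apply (single_limit f D l l' x0); [|exact H1|exact H2].
  intros alp Hal. destruct (Ha alp Hal) as [x [Hx Hd]]. exists x. split; auto.
Qed.

Lemma exp_monotone x y : x <= y -> exp x <= exp y.
Proof. intros. destruct (Req_dec x y) as [->|]; [lra|]. left; apply exp_increasing; lra. Qed.

Lemma ln_monotone x y : 0 < x -> x <= y -> ln x <= ln y.
Proof. intros. destruct (Req_dec x y) as [->|]; [lra|]. left; apply ln_increasing; lra. Qed.

Lemma monotone_limit (F : R -> R) (D : R -> Prop) (x0 : R) :
  (exists u, D u) -> (forall u, D u -> u <> x0) -> (forall u, D u -> 0 <= F u) ->
  (forall p q, D p -> D q -> Rabs (q - x0) <= Rabs (p - x0) -> F q <= F p) ->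
  exists L, limit1_in F D L x0 /\ (forall u, D u -> L <= F u) /\
    (forall eps, 0 < eps -> exists u, D u /\ F u < L + eps).
Proof.
  intros [u1 Hu1] Hne Hp Hm. set (S := fun v => exists u, D u /\ v = - F u).
  assert (Hb : bound S) by (exists 0; intros v [u [Hu ->]]; pose proof (Hp u Hu); lra).
  destruct (completeness S Hb (ex_intro _ (- F u1) (ex_intro _ u1 (conj Hu1 eq_refl))))
    as [M [HM1 HM2]].
  assert (Hlow : forall u, D u -> - M <= F u).
  { intros u Hu. assert (- F u <= M) by (apply HM1; exists u; auto). lra. }
  assert (Happ : forall eps, 0 < eps -> exists u, D u /\ F u < - M + eps).
  { intros eps He. apply NNPP; intro Hn. assert (M <= M - eps); [|lra]. apply HM2.
    intros v [u [Hu ->]]. apply Rnot_lt_le; intro. apply Hn. exists u. split; auto. lra. }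
  exists (- M). split; [|split; auto].
  apply limit_intro. intros eps He. destruct (Happ eps He) as [u0 [Hu0 Hf]].
  exists (Rabs (u0 - x0)). split; [apply Rabs_pos_lt; specialize (Hne u0 Hu0); lra|].
  intros u Hu Hd. assert (F u <= F u0) by (apply Hm; auto; lra). pose proof (Hlow u Hu).
  rewrite Rabs_pos_eq; lra.
Qed.

(* exp_int0 g x is the limit of exp(\int_e^x g) as e -> 0+, for a continuous
   nonpositive g on (0,x]: these values increase with e. *)
Section ExpInt.
Variables (g : R -> R) (x : R).
Hypothesis Hx : 0 < x.
Hypothesis Hg : forall z, 0 < z <= x -> continuity_pt g z /\ g z <= 0.

Lemma approach_zero_from_right : forall alp, 0 < alp -> exists e, 0 < e <= x /\ Rabs (e - 0) < alp.
Proof.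
  intros alp Ha. exists (Rmin x (alp / 2)). pose proof (Rmin_l x (alp / 2)).
  pose proof (Rmin_r x (alp / 2)). assert (0 < Rmin x (alp / 2)) by (apply Rmin_pos; lra).
  split; [lra|]. rewrite Rminus_0_r, Rabs_pos_eq; lra.
Qed.

Lemma exp_Rint_mono e1 e2 : 0 < e1 -> e1 <= e2 -> e2 <= x ->
  exp (Rint g e1 x) <= exp (Rint g e2 x).
Proof.
  intros H1 H2 H3. assert (Hc : forall e e', 0 < e -> e' <= x -> cont_on g e e')
    by (intros e e' ? ? z ?; apply Hg; lra).
  rewrite <- (Rint_chasles g e1 e2 x H2 H3 (Hc e1 x H1 (Rle_refl _))).
  assert (Rint g e1 e2 <= 0) by (apply Rint_nonpos; auto; intros; apply Hg; lra).
  apply exp_monotone. lra.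
Qed.

Lemma exp_int0_spec : limit1_in (fun e => exp (Rint g e x)) (fun e => 0 < e <= x) (exp_int0 g x) 0.
Proof.
  unfold exp_int0. apply (epsilon_spec (inhabits 0)).
  destruct (monotone_limit (fun e => exp (Rint g e x)) (fun e => 0 < e <= x) 0) as [L [HL _]].
  - exists x; lra.
  - intros; lra.
  - intros; left; apply exp_pos.
  - intros p q Hp Hq Hpq. rewrite !Rminus_0_r, !Rabs_pos_eq in Hpq by lra.
    apply exp_Rint_mono; lra.
  - exists L; exact HL.
Qed.
End ExpInt.

(* exp_int0 g x = exp_int0 g y * exp(\int_y^x g): this is how the
   equilibrium condition of the theorem transports from y to x. *)
Lemma exp_int0_ratio g x y : 0 < y -> y <= x ->
  (forall z, 0 < z <= x -> continuity_pt g z /\ g z <= 0) ->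
  exp_int0 g x = exp_int0 g y * exp (Rint g y x).
Proof.
  intros Hy Hyx Hg.
  assert (Hgy : forall z, 0 < z <= y -> continuity_pt g z /\ g z <= 0) by (intros; apply Hg; lra).
  pose proof (exp_int0_spec g x ltac:(lra) Hg) as Lx. pose proof (exp_int0_spec g y Hy Hgy) as Ly.
  set (c := exp (Rint g y x)). assert (Hc : 0 < c) by apply exp_pos.
  apply (limit_unique (fun e => exp (Rint g e x)) (fun e => 0 < e <= x) _ _ 0); auto.
  { apply approach_zero_from_right; lra. }
  apply limit_intro. intros eps He. apply limit_elim with (eps := eps / c) in Ly;
    [|apply Rdiv_lt_0_compat; auto].
  destruct Ly as [a [Ha Ly]]. exists (Rmin a y). split; [apply Rmin_pos; auto|].
  intros e [He1 He2] Hd. pose proof (Rmin_l a y). pose proof (Rmin_r a y).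
  rewrite Rminus_0_r, Rabs_pos_eq in Hd by lra.
  assert (Hcont : cont_on g e x) by (intros z Hz; apply Hg; lra).
  rewrite <- (Rint_chasles g e y x ltac:(lra) Hyx Hcont), exp_plus. fold c.
  specialize (Ly e ltac:(lra) ltac:(rewrite Rminus_0_r, Rabs_pos_eq; lra)).
  replace (exp (Rint g e y) * c - exp_int0 g y * c) with ((exp (Rint g e y) - exp_int0 g y) * c) by ring.
  rewrite Rabs_mult, (Rabs_pos_eq c) by lra.
  apply (Rmult_lt_compat_r c) in Ly; auto. unfold Rdiv in Ly. rewrite Rmult_assoc, Rinv_l in Ly by lra. lra.
Qed.

Definition cont_within (f : R -> R) (a b t : R) : Prop :=
  forall eps, 0 < eps -> exists d, 0 < d /\
    forall s, a <= s <= b -> Rabs (s - t) < d -> Rabs (f s - f t) < eps.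

Lemma cont_intro f t : (forall eps, 0 < eps -> exists d, 0 < d /\
  forall s, Rabs (s - t) < d -> Rabs (f s - f t) < eps) -> continuity_pt f t.
Proof.
  intros H eps He. destruct (H eps He) as [d [Hd H']]. exists d. split; auto.
  intros s [_ Hs]. simpl in *. unfold R_dist in *. auto.
Qed.

Lemma cont_within_of_cont f a b t : continuity_pt f t -> cont_within f a b t.
Proof.
  intros H eps He. destruct (H eps He) as [d [Hd H']]. exists d. split; [exact Hd|].
  intros s _ Hs. destruct (Req_dec s t) as [->|Hne]; [rewrite Rminus_diag, Rabs_R0; auto|].
  apply (H' s). split; [split; [exact I|auto]|auto].
Qed.

Lemma cont_of_cont_within f a b t : a < t < b -> cont_within f a b t -> continuity_pt f t.
Proof.
  intros Ht H. apply cont_intro. intros eps He. destruct (H eps He) as [d [Hd H']].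
  exists (Rmin d (Rmin (t - a) (b - t))). split; [repeat apply Rmin_pos; lra|].
  intros s Hs. pose proof (Rmin_l d (Rmin (t - a) (b - t))). pose proof (Rmin_r d (Rmin (t - a) (b - t))).
  pose proof (Rmin_l (t - a) (b - t)). pose proof (Rmin_r (t - a) (b - t)).
  apply Rabs_def2 in Hs. apply H'; [lra|]. apply Rabs_def1; lra.
Qed.

Lemma cont_within_of_unif f s u t : s <= t <= u -> unif_cont f s u -> cont_within f s u t.
Proof.
  intros Ht H eps He. destruct (H eps He) as [d [Hd H']]. exists d; split; [exact Hd|].
  intros; apply H'; auto.
Qed.

Lemma cont_within_comp k f a b c d t : cont_within f a b t ->
  (forall s, a <= s <= b -> c <= f s <= d) -> a <= t <= b -> cont_within k c d (f t) ->
  cont_within (fun s => k (f s)) a b t.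
Proof.
  intros Hf Hr Ht Hk eps He. destruct (Hk eps He) as [d1 [Hd1 H1]].
  destruct (Hf d1 Hd1) as [d2 [Hd2 H2]]. exists d2. split; [exact Hd2|]. intros s Hs Hd.
  apply H1; auto.
Qed.

Definition clamp (a b s : R) : R := Rmax a (Rmin b s).

Lemma clamp_range a b s : a <= b -> a <= clamp a b s <= b.
Proof. intros; unfold clamp, Rmax, Rmin; repeat destruct Rle_dec; lra. Qed.

Lemma clamp_id a b s : a <= s <= b -> clamp a b s = s.
Proof. intros; unfold clamp, Rmax, Rmin; repeat destruct Rle_dec; lra. Qed.

Lemma clamp_lipschitz a b s t : a <= b -> Rabs (clamp a b s - clamp a b t) <= Rabs (s - t).
Proof. intros; unfold clamp, Rmax, Rmin, Rabs; repeat destruct Rle_dec; repeat destruct Rcase_abs; lra. Qed.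

Lemma cont_clamp f a b : a <= b -> (forall t, a <= t <= b -> cont_within f a b t) ->
  continuity (fun s => f (clamp a b s)).
Proof.
  intros Hab H s. apply cont_intro. intros eps He.
  destruct (H _ (clamp_range a b s Hab) eps He) as [d [Hd H']]. exists d. split; auto.
  intros s' Hs'. apply H'; [apply clamp_range; auto|]. eapply Rle_lt_trans; [apply clamp_lipschitz; auto|auto].
Qed.

Lemma unif_cont_of_within f a b : a <= b -> (forall t, a <= t <= b -> cont_within f a b t) ->
  unif_cont f a b.
Proof.
  intros Hab H eps He.
  destruct (unif_cont_of_cont (fun s => f (clamp a b s)) a b
    (fun t _ => cont_clamp f a b Hab H t) eps He) as [d [Hd H']].
  exists d; split; auto. intros x y Hx Hy Hxy. specialize (H' x y Hx Hy Hxy).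
  rewrite (clamp_id a b x Hx), (clamp_id a b y Hy) in H'. auto.
Qed.

Lemma IVT_within f a b c : a <= b -> (forall t, a <= t <= b -> cont_within f a b t) ->
  f b <= c <= f a -> exists v, a <= v <= b /\ f v = c.
Proof.
  intros Hab H Hc. set (fc := fun s => f (clamp a b s) - c).
  assert (Hcont : continuity fc).
  { unfold fc. apply continuity_minus; [apply cont_clamp; auto|apply continuity_const; intros ? ?; auto]. }
  destruct (IVT_cor fc a b Hcont Hab) as [v [Hv Hfv]].
  { unfold fc. rewrite (clamp_id a b a), (clamp_id a b b) by lra. nra. }
  exists v. split; auto. unfold fc in Hfv. rewrite (clamp_id a b v Hv) in Hfv. lra.
Qed.

Lemma cont_within_of_deriv P t l : 0 <= t <= 1 -> deriv_within01 P t l -> cont_within P 0 1 t.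
Proof.
  intros Ht H eps He. destruct (limit_elim _ _ _ _ H 1 ltac:(lra)) as [al [Hal H']].
  set (K := Rabs l + 1). assert (HK : 0 < K) by (unfold K; pose proof (Rabs_pos l); lra).
  exists (Rmin al (eps / K)). split; [apply Rmin_pos; auto; apply Rdiv_lt_0_compat; auto|].
  intros s Hs Hd. pose proof (Rmin_l al (eps / K)). pose proof (Rmin_r al (eps / K)).
  destruct (Req_dec s t) as [->|Hne]; [rewrite Rminus_diag, Rabs_R0; auto|].
  specialize (H' s ltac:(split; auto) ltac:(lra)).
  assert (Hq : Rabs ((P s - P t) / (s - t)) <= K).
  { unfold K. replace ((P s - P t) / (s - t)) with (((P s - P t) / (s - t) - l) + l) by ring.
    eapply Rle_trans; [apply Rabs_triang|]. lra. }
  replace (P s - P t) with ((P s - P t) / (s - t) * (s - t)) by (field; lra).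
  rewrite Rabs_mult. assert (0 < Rabs (s - t)) by (apply Rabs_pos_lt; lra).
  apply Rle_lt_trans with (K * Rabs (s - t)); [apply Rmult_le_compat_r; lra|].
  assert (Rabs (s - t) < eps / K) by lra.
  apply (Rmult_lt_compat_l K) in H3; auto. unfold Rdiv in H3.
  rewrite <- Rmult_assoc, (Rmult_comm K eps), Rmult_assoc, Rinv_r in H3 by lra. lra.
Qed.

Section Effectiveness.
Variable P : R -> R.
Hypothesis HP : effectiveness P.

Lemma eff_one : P 1 = 1. Proof. apply HP. Qed.
Lemma eff_lt1 t : 0 <= t < 1 -> P t < 1. Proof. apply HP. Qed.
Lemma eff_range t : 0 <= t <= 1 -> 0 <= P t <= 1. Proof. apply HP. Qed.

Lemma eff_mono s t : 0 <= s -> s <= t -> t <= 1 -> P s <= P t.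
Proof. intros. destruct (Req_dec s t) as [->|]; [lra|]. left; apply HP; lra. Qed.

Lemma eff_cont_within t : 0 <= t <= 1 -> cont_within P 0 1 t.
Proof.
  intros Ht. destruct HP as [_ [_ [_ [_ [_ [dP [H _]]]]]]]. eapply cont_within_of_deriv; eauto.
Qed.

Lemma eff_cont t : 0 < t < 1 -> continuity_pt P t.
Proof. intros Ht. apply (cont_of_cont_within P 0 1); auto. apply eff_cont_within; lra. Qed.

Lemma lnq_nonpos t : 0 <= t <= 1 -> lnq P t <= 0.
Proof.
  intros Ht. unfold lnq. destruct (Req_dec t 1) as [->|Hne].
  - rewrite eff_one, Rminus_diag. unfold ln.
    destruct (Rlt_dec 0 0) as [hh|hh]; [exfalso; exact (Rlt_irrefl 0 hh)|apply Rle_refl].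
  - pose proof (eff_lt1 t ltac:(lra)). pose proof (eff_range t Ht).
    rewrite <- ln_1. apply ln_monotone; lra.
Qed.

Lemma lnq_unif_cont a b : 0 <= a -> a <= b -> b < 1 -> unif_cont (lnq P) a b.
Proof.
  intros Ha Hab Hb. apply unif_cont_of_within; auto. intros t Ht. unfold lnq.
  apply (cont_within_comp ln (fun s => 1 - P s) a b 0 1); auto.
  - intros eps He. destruct (eff_cont_within t ltac:(lra) eps He) as [d [Hd H]].
    exists d; split; auto. intros s Hs Hd'.
    replace (1 - P s - (1 - P t)) with (- (P s - P t)) by ring.
    rewrite Rabs_Ropp. apply H; auto; lra.
  - intros s Hs. pose proof (eff_range s ltac:(lra)). lra.
  - apply cont_within_of_cont, derivable_continuous_pt. exists (/ (1 - P t)).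
    apply derivable_pt_lim_ln. pose proof (eff_lt1 t ltac:(lra)). lra.
Qed.
End Effectiveness.

Definition T_curve (Tk : R -> R) : Prop :=
  Tk 0 = 1 /\ limit1_in Tk (fun x => 0 <= x) (Tk 0) 0 /\ (forall x, 0 < x -> 0 < Tk x <= 1) /\
  exists dT, forall x, 0 < x -> derivable_pt_lim Tk x (dT x) /\ dT x < 0.

Lemma class_T_curve T k : class_T T -> (1 <= k)%nat -> T_curve (T k).
Proof.
  intros HT Hk. destruct (HT k Hk) as [H0 [Hl [Hr [_ [dT HdT]]]]].
  split; [auto|split; [auto|split; [auto|exists dT]]]. intros x Hx. destruct (HdT x Hx); tauto.
Qed.

Lemma class_T_next T k x : class_T T -> (1 <= k)%nat -> 0 <= x -> T (S k) x <= T k x.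
Proof.
  intros HT Hk Hx. destruct (Req_dec x 0) as [->|].
  - rewrite (proj1 (HT k Hk)), (proj1 (HT (S k) ltac:(lia))). lra.
  - left. apply (HT k Hk). lra.
Qed.

Section Curve.
Variable Tk : R -> R.
Hypothesis HT : T_curve Tk.

Lemma curve_zero : Tk 0 = 1. Proof. apply HT. Qed.

Lemma curve_cont x : 0 < x -> continuity_pt Tk x.
Proof.
  intros H. destruct HT as [_ [_ [_ [dT HdT]]]].
  apply derivable_continuous_pt. exists (dT x). apply HdT; auto.
Qed.

Lemma curve_strict_pos x1 x2 : 0 < x1 -> x1 < x2 -> Tk x2 < Tk x1.
Proof.
  intros H1 H2. destruct HT as [_ [_ [_ [dT HdT]]]].
  destruct (MVT_cor2 Tk dT x1 x2 H2 ltac:(intros c Hc; apply HdT; lra)) as [c [E Hc]].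
  destruct (HdT c ltac:(lra)) as [_ Hn]. assert (dT c * (x2 - x1) < 0) by nra. lra.
Qed.

Lemma curve_lt1 x : 0 < x -> Tk x < 1.
Proof.
  intros H. pose proof (curve_strict_pos (x / 2) x ltac:(lra) ltac:(lra)).
  destruct HT as [_ [_ [Hr _]]]. pose proof (Hr (x / 2) ltac:(lra)). lra.
Qed.

Lemma curve_strict x1 x2 : 0 <= x1 -> x1 < x2 -> Tk x2 < Tk x1.
Proof.
  intros H1 H2. destruct (Req_dec x1 0) as [->|]; [rewrite curve_zero; apply curve_lt1; auto|].
  apply curve_strict_pos; lra.
Qed.

Lemma curve_mono x1 x2 : 0 <= x1 -> x1 <= x2 -> Tk x2 <= Tk x1.
Proof. intros. destruct (Req_dec x1 x2) as [->|]; [lra|]. left; apply curve_strict; lra. Qed.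

Lemma curve_le1 x : 0 <= x -> Tk x <= 1.
Proof. intros. rewrite <- curve_zero. apply curve_mono; lra. Qed.

Lemma curve_pos x : 0 <= x -> 0 < Tk x.
Proof.
  intros. destruct (Req_dec x 0) as [->|]; [rewrite curve_zero; lra|].
  destruct HT as [_ [_ [Hr _]]]. apply Hr; lra.
Qed.

Lemma curve_cont_within x b : 0 <= x -> cont_within Tk 0 b x.
Proof.
  intros Hx. destruct (Req_dec x 0) as [->|Hne].
  - intros eps He. destruct HT as [_ [Hl _]].
    destruct (limit_elim _ _ _ _ Hl eps He) as [d [Hd H]]. exists d; split; auto.
    intros s Hs Hd'. apply H; lra.
  - apply cont_within_of_cont, curve_cont; lra.
Qed.
End Curve.

Lemma lnq_curve_cont P Tk z : effectiveness P -> T_curve Tk -> 0 < z ->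
  continuity_pt (fun z => ln (1 - P (Tk z))) z.
Proof.
  intros HP HT Hz. apply (continuity_pt_comp (fun z => 1 - P (Tk z)) ln).
  - apply (continuity_pt_minus (fun _ => 1) (fun z => P (Tk z))); [apply continuity_pt_const; intros ? ?; auto|].
    apply (continuity_pt_comp Tk P); [apply curve_cont; auto|].
    apply eff_cont; auto. split; [apply curve_pos|apply curve_lt1]; auto; lra.
  - apply derivable_continuous_pt. exists (/ (1 - P (Tk z))). apply derivable_pt_lim_ln.
    pose proof (eff_lt1 P HP (Tk z)). pose proof (curve_pos Tk HT z). pose proof (curve_lt1 Tk HT z).
    assert (P (Tk z) < 1) by (apply H; lra). lra.
Qed.

(* Probability that Player I, consuming along beta, has not succeeded by u. *)
Definition survival_I (P1 beta : R -> R) (u : R) : R := exp (- RS_int (lnq P1) beta 0 u).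

Lemma survival_I_zero P1 beta : survival_I P1 beta 0 = 1.
Proof. unfold survival_I. rewrite RS_int_point, Ropp_0. apply exp_0. Qed.

Lemma survival_I_mono P1 beta u1 u2 : effectiveness P1 -> nonincreasing_on beta 0 u2 ->
  0 <= u1 -> u1 <= u2 -> u2 < 1 -> survival_I P1 beta u2 <= survival_I P1 beta u1.
Proof.
  intros HP Hm H1 H2 H3. unfold survival_I.
  rewrite (RS_int_split (lnq P1) beta 0 u1 u2); auto; [|apply lnq_unif_cont; auto; lra].
  destruct (Req_dec u1 u2) as [<-|Hne]; [rewrite RS_int_point, Rplus_0_r; lra|].
  assert (0 <= RS_int (lnq P1) beta u1 u2).
  { apply RS_int_nonneg; [lra|apply lnq_unif_cont; auto; lra|apply (nonincreasing_sub beta 0 u2); auto; lra|].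
    intros; apply lnq_nonpos; auto; lra. }
  apply exp_monotone. lra.
Qed.

Lemma phi_before_end P1 beta t : t < 1 -> phi P1 beta t = 1 - survival_I P1 beta t.
Proof. intros H. unfold phi, survival_I. destruct (Rlt_dec t 1); [auto|lra]. Qed.

Lemma phi_at_end P1 beta : effectiveness P1 -> nonincreasing_on beta 0 1 ->
  exists L, phi P1 beta 1 = 1 - L /\ 0 <= L /\ (forall u, 0 <= u < 1 -> L <= survival_I P1 beta u) /\
    (forall eps, 0 < eps -> exists u, 0 <= u < 1 /\ survival_I P1 beta u < L + eps).
Proof.
  intros HP Hm.
  destruct (monotone_limit (survival_I P1 beta) (fun u => 0 <= u < 1) 1) as [L [HL [H1 H2]]].
  - exists 0; lra.
  - intros; lra.
  - intros; left; apply exp_pos.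
  - intros p q Hp Hq Hpq. rewrite !Rabs_left in Hpq by lra.
    apply survival_I_mono; auto; try lra. apply (nonincreasing_sub beta 0 1); auto; lra.
  - exists L. split; [|split; [|split; auto]].
    + unfold phi. destruct (Rlt_dec 1 1) as [|_]; [lra|]. f_equal. symmetry.
      apply (limit_unique (survival_I P1 beta) (fun u => 0 <= u < 1) _ _ 1); [|exact HL|].
      * intros alp Ha. exists (Rmax 0 (1 - alp / 2)). unfold Rmax; destruct Rle_dec;
          split; try lra; rewrite Rabs_left; lra.
      * apply (epsilon_spec (inhabits 0)
          (fun l => limit1_in (survival_I P1 beta) (fun u => 0 <= u < 1) l 1)). exists L; exact HL.
    + apply Rnot_lt_le; intro HL0. destruct (H2 (- L) ltac:(lra)) as [u [Hu Hf]].
      pose proof (exp_pos (- RS_int (lnq P1) beta 0 u)). unfold survival_I in Hf. lra.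
Qed.

Lemma survival_nonneg P1 beta e : effectiveness P1 -> 0 <= e <= 1 -> nonincreasing_on beta 0 e ->
  0 <= 1 - phi P1 beta e.
Proof.
  intros HP He Hm. destruct (Rle_lt_or_eq_dec e 1 (proj2 He)) as [He1| ->].
  - rewrite phi_before_end by auto. pose proof (exp_pos (- RS_int (lnq P1) beta 0 e)). unfold survival_I. lra.
  - destruct (phi_at_end P1 beta HP Hm) as [L [HL1 [HL _]]]. rewrite HL1. lra.
Qed.

Lemma survival_I_split P1 beta v u : effectiveness P1 -> nonincreasing_on beta 0 u ->
  0 <= v <= u -> u < 1 ->
  survival_I P1 beta u = survival_I P1 beta v * exp (- RS_int (lnq P1) beta v u).
Proof.
  intros HP Hm Hv Hu. unfold survival_I. rewrite <- exp_plus. f_equal.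
  rewrite (RS_int_split (lnq P1) beta 0 v u); try lra; auto. apply (lnq_unif_cont P1 HP); lra.
Qed.

Lemma survival_I_factor_lower P1 beta v u : effectiveness P1 -> nonincreasing_on beta 0 u ->
  0 <= v < u -> u < 1 ->
  1 + lnq P1 u * (beta v - beta u) <= exp (- RS_int (lnq P1) beta v u).
Proof.
  intros HP Hm Hv Hu.
  assert (HM : forall t, v <= t <= u -> Rabs (lnq P1 t) <= - lnq P1 u).
  { intros t Ht. pose proof (lnq_nonpos P1 HP t ltac:(lra)).
    assert (lnq P1 u <= lnq P1 t).
    { unfold lnq. apply ln_monotone; [pose proof (eff_lt1 P1 HP u ltac:(lra)); lra|].
      assert (P1 t <= P1 u) by (apply (eff_mono P1 HP); lra). lra. }
    rewrite Rabs_left1 by lra. lra. }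
  assert (Hbd : Rabs (RS_int (lnq P1) beta v u) <= - lnq P1 u * (beta v - beta u)).
  { apply RS_int_abs; auto; [lra|apply (lnq_unif_cont P1 HP); lra|].
    apply (nonincreasing_sub beta 0 u); auto; lra. }
  eapply Rle_trans; [|apply exp_ineq1_le]. unfold Rabs in Hbd; destruct Rcase_abs; lra.
Qed.

(* The recursion of Kpay, with w the value of the subgame after Player II's
   action and f the success probability of Player I before it. *)
Lemma payoff_step A1 A2 f p w :
  A1 * f - A2 * (1 - f) * p + (1 - p) * (1 - f) * ((A1 + A2) * w - A2)
  = A1 - (A1 + A2) * (1 - f) * (1 - (1 - p) * w).
Proof. ring. Qed.

Lemma le_of_linear_defect A K S x : 0 <= A -> 0 <= K -> 0 < x ->
  (forall c, 0 < c <= x -> A * (1 - K * c) <= S) -> A <= S.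
Proof.
  intros HA HK Hx H. apply Rnot_lt_le; intro Hlt.
  set (c := Rmin x ((A - S) / (2 * (A * K + 1)))).
  assert (Hc : 0 < c) by (apply Rmin_pos; [lra|apply Rdiv_lt_0_compat; nra]).
  assert (Hcx : c <= x) by apply Rmin_l.
  assert (Hc2 : c * (2 * (A * K + 1)) <= A - S).
  { assert (Hcc : c <= (A - S) / (2 * (A * K + 1))) by apply Rmin_r.
    apply (Rmult_le_compat_r (2 * (A * K + 1))) in Hcc; [|nra].
    unfold Rdiv in Hcc. rewrite Rmult_assoc, Rinv_l in Hcc by nra. lra. }
  specialize (H c ltac:(lra)). nra.
Qed.

Lemma unif_cont_shift al p e : p <= e -> unif_cont al p e -> unif_cont (fun t => al (Rmax p t)) 0 e.
Proof.
  intros Hpe H eps Heps. destruct (H eps Heps) as [d [Hd H']]. exists d; split; auto.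
  intros x y Hx Hy Hxy. apply H'; [unfold Rmax; destruct Rle_dec; lra|unfold Rmax; destruct Rle_dec; lra|].
  eapply Rle_lt_trans; [|exact Hxy]. unfold Rmax, Rabs; repeat destruct Rle_dec; repeat destruct Rcase_abs; lra.
Qed.

Lemma freeze_frozen (al beta : R -> R) p e : p <= e ->
  (forall t, 0 <= t -> beta t = al (Rmax p t)) ->
  forall t, 0 <= t -> freeze beta e t = al (Rmax e t).
Proof.
  intros Hpe Hb t Ht. unfold freeze. destruct (Rlt_dec t e) as [Hlt|Hge].
  - rewrite Hb by lra. f_equal. unfold Rmax; repeat destruct Rle_dec; lra.
  - rewrite Hb by lra. f_equal. unfold Rmax; repeat destruct Rle_dec; lra.
Qed.

Section Game.
Variables (P1 P2 : R -> R) (A1 A2 : R) (a : R) (m : nat) (T : nat -> R -> R).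
Hypothesis HP1 : effectiveness P1.
Hypothesis HP2 : effectiveness P2.
Hypothesis HA1 : 0 < A1.
Hypothesis HA2 : 0 < A2.
Hypothesis HT : class_T T.
Hypothesis Hyp : forall (x : R) (k : nat), 0 < x <= a -> (1 <= k <= m)%nat ->
  exp_int0 (fun al => ln (1 - P1 (T k al))) x + prodR k (fun i => 1 - P2 (T i x)) = 1.

Definition lnqT (k : nat) (z : R) : R := ln (1 - P1 (T k z)).

(* Probability that k units of Player II, used at the moments T_i(x), all
   fail; and the value of the game with resources x and k. *)
Definition miss_II (k : nat) (x : R) : R := prodR k (fun i => 1 - P2 (T i x)).
Definition value (k : nat) (x : R) : R := (A1 + A2) * miss_II k x - A2.

Lemma curve_T k : (1 <= k)%nat -> T_curve (T k).
Proof. intros Hk. apply class_T_curve; auto. Qed.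

Lemma lnqT_cont_on k y x : (1 <= k)%nat -> 0 < y -> cont_on (lnqT k) y x.
Proof. intros Hk Hy z Hz. apply lnq_curve_cont; auto; [apply curve_T; auto|lra]. Qed.

Lemma lnqT_nonpos k z : (1 <= k)%nat -> 0 <= z -> lnqT k z <= 0.
Proof.
  intros Hk Hz. apply (lnq_nonpos P1 HP1 (T k z)).
  split; [left; apply (curve_pos _ (curve_T k Hk))|apply (curve_le1 _ (curve_T k Hk))]; lra.
Qed.

Lemma P2_T_range k x : (1 <= k)%nat -> 0 <= x -> 0 <= P2 (T k x) <= 1.
Proof.
  intros Hk Hx. apply (eff_range P2 HP2).
  split; [left; apply (curve_pos _ (curve_T k Hk))|apply (curve_le1 _ (curve_T k Hk))]; lra.
Qed.

Lemma miss_II_range k x : 0 <= x -> 0 <= miss_II k x <= 1.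
Proof.
  intros Hx. unfold miss_II. induction k as [|k IH]; simpl; [lra|].
  pose proof (P2_T_range (S k) x ltac:(lia) Hx). split; [apply Rmult_le_pos; lra|]. nra.
Qed.

Lemma miss_II_factor k x : (1 <= k)%nat -> 0 <= x -> miss_II k x <= 1 - P2 (T k x).
Proof.
  intros Hk Hx. destruct k as [|k]; [lia|]. change (miss_II (S k) x) with (miss_II k x * (1 - P2 (T (S k) x))).
  pose proof (miss_II_range k x Hx). pose proof (P2_T_range (S k) x Hk Hx). nra.
Qed.

Lemma miss_II_zero k : (1 <= k)%nat -> miss_II k 0 = 0.
Proof.
  intros Hk. pose proof (miss_II_factor k 0 Hk (Rle_refl 0)). pose proof (miss_II_range k 0 (Rle_refl 0)).
  rewrite (curve_zero _ (curve_T k Hk)), (eff_one P2 HP2) in H. lra.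
Qed.

Lemma miss_II_small k : (1 <= k)%nat -> forall d, 0 < d -> exists z0, 0 < z0 /\
  forall z, 0 <= z <= z0 -> miss_II k z < d.
Proof.
  intros Hk d Hd. destruct (eff_cont_within P2 HP2 1 ltac:(lra) d Hd) as [d1 [Hd1 H1]].
  destruct (curve_cont_within _ (curve_T k Hk) 0 1 (Rle_refl 0) d1 Hd1) as [d2 [Hd2 H2]].
  exists (Rmin 1 (d2 / 2)). split; [apply Rmin_pos; lra|]. intros z Hz.
  pose proof (Rmin_l 1 (d2 / 2)). pose proof (Rmin_r 1 (d2 / 2)).
  pose proof (miss_II_factor k z Hk ltac:(lra)).
  specialize (H2 z ltac:(lra) ltac:(rewrite Rminus_0_r, Rabs_pos_eq; lra)).
  rewrite (curve_zero _ (curve_T k Hk)) in H2.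
  pose proof (curve_pos _ (curve_T k Hk) z ltac:(lra)). pose proof (curve_le1 _ (curve_T k Hk) z ltac:(lra)).
  specialize (H1 (T k z) ltac:(lra) H2). rewrite (eff_one P2 HP2) in H1.
  apply Rabs_def2 in H1. lra.
Qed.

Lemma miss_II_ratio k x y : (1 <= k <= m)%nat -> 0 < y -> y <= x -> x <= a ->
  1 - miss_II k x = (1 - miss_II k y) * exp (Rint (lnqT k) y x).
Proof.
  intros Hk Hy Hyx Hxa.
  assert (Ex := Hyp x k ltac:(lra) Hk). assert (Ey := Hyp y k ltac:(lra) Hk).
  fold (lnqT k) in Ex, Ey. fold (miss_II k x) in Ex. fold (miss_II k y) in Ey.
  replace (1 - miss_II k x) with (exp_int0 (lnqT k) x) by lra.
  replace (1 - miss_II k y) with (exp_int0 (lnqT k) y) by lra.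
  apply exp_int0_ratio; auto. intros z Hz. split.
  - apply (lnqT_cont_on k z z); lia || lra.
  - apply lnqT_nonpos; lia || lra.
Qed.

Lemma step_upper j x y e f K : 0 <= y -> T (S j) y = e -> 0 <= 1 - f -> K <= value j y ->
  1 - miss_II (S j) x <= (1 - f) * (1 - miss_II (S j) y) ->
  A1 * f - A2 * (1 - f) * P2 e + (1 - P2 e) * (1 - f) * K <= value (S j) x.
Proof.
  intros Hy HTy Hf HK Hsurv. pose proof (P2_T_range (S j) y ltac:(lia) Hy) as HP.
  change (miss_II (S j) y) with (miss_II j y * (1 - P2 (T (S j) y))) in Hsurv.
  rewrite HTy in HP, Hsurv.
  assert ((1 - P2 e) * (1 - f) * K <= (1 - P2 e) * (1 - f) * value j y)
    by (apply Rmult_le_compat_l; [apply Rmult_le_pos|]; lra).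
  eapply Rle_trans; [apply Rplus_le_compat_l; eassumption|].
  unfold value. rewrite payoff_step. nra.
Qed.

Lemma step_lower j x y e f K : 0 <= y -> 0 <= e -> e <= T (S j) y -> 0 <= 1 - f ->
  (P2 e < 1 -> value j y <= K) -> (1 - f) * (1 - miss_II (S j) y) <= 1 - miss_II (S j) x ->
  value (S j) x <= A1 * f - A2 * (1 - f) * P2 e + (1 - P2 e) * (1 - f) * K.
Proof.
  intros Hy He HTy Hf HK Hsurv.
  pose proof (curve_le1 _ (curve_T (S j) ltac:(lia)) y Hy).
  assert (HPe : 0 <= P2 e <= P2 (T (S j) y))
    by (split; [apply (eff_range P2 HP2)|apply (eff_mono P2 HP2)]; lra).
  pose proof (P2_T_range (S j) y ltac:(lia) Hy). pose proof (miss_II_range j y Hy).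
  change (miss_II (S j) y) with (miss_II j y * (1 - P2 (T (S j) y))) in Hsurv.
  assert ((1 - P2 e) * (1 - f) * value j y <= (1 - P2 e) * (1 - f) * K).
  { destruct (Req_dec (P2 e) 1) as [->|HP1e]; [lra|].
    apply Rmult_le_compat_l; [apply Rmult_le_pos|apply HK]; lra. }
  eapply Rle_trans; [|apply Rplus_le_compat_l; eassumption].
  unfold value. rewrite payoff_step.
  assert ((1 - f) * (1 - (1 - P2 e) * miss_II j y) <= 1 - miss_II (S j) x); [|nra].
  eapply Rle_trans; [|exact Hsurv]. apply Rmult_le_compat_l; nra.
Qed.

Section CurveActionII.
Variables (k : nat) (beta : R -> R) (e : R).
Hypothesis Hk : (1 <= k <= m)%nat.
Hypothesis Hmon : nonincreasing_on beta 0 1.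
Hypothesis Huc : unif_cont beta 0 1.
Hypothesis Hrange : forall t, 0 <= t <= 1 -> 0 <= beta t <= beta 0.
Hypothesis Hxa : beta 0 <= a.
Hypothesis He : 0 <= e <= 1.
Hypothesis Hbehind : forall t, 0 <= t <= e -> t <= T k (beta t).
Hypothesis Hon : T k (beta e) = e.

Let HTk : T_curve (T k) := curve_T k (proj1 Hk).

Lemma lnq_ge_curve t : 0 <= t <= e -> 0 < beta t -> lnqT k (beta t) <= lnq P1 t.
Proof.
  intros Ht Hpos. unfold lnqT, lnq. pose proof (Hbehind t Ht).
  pose proof (curve_lt1 _ HTk (beta t) Hpos). pose proof (curve_pos _ HTk (beta t) ltac:(lra)).
  apply ln_monotone; [pose proof (eff_lt1 P1 HP1 (T k (beta t)) ltac:(lra)); lra|].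
  assert (P1 t <= P1 (T k (beta t))) by (apply (eff_mono P1 HP1); lra). lra.
Qed.

Lemma survival_ge_ratio u : 0 < u <= e -> u < 1 -> 0 < beta u ->
  1 - miss_II k (beta 0) <= (1 - miss_II k (beta u)) * survival_I P1 beta u.
Proof.
  intros Hu Hu1 Hbu. pose proof (Hrange u ltac:(lra)).
  assert (Hcmp : exp (Rint (lnqT k) (beta u) (beta 0)) <= survival_I P1 beta u).
  { apply exp_monotone.
    apply (RS_int_change_var_lower (lnq P1) beta (lnqT k) 0 u); try lra.
    - apply (lnq_unif_cont P1 HP1); lra.
    - apply (nonincreasing_sub beta 0 1); auto; lra.
    - apply (unif_cont_sub beta 0 1); auto; lra.
    - apply lnqT_cont_on; lia || lra.
    - intros t Ht. apply lnq_ge_curve; [lra|].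
      assert (beta u <= beta t) by (apply Hmon; lra). lra. }
  rewrite (miss_II_ratio k (beta 0) (beta u)); auto; try lra.
  pose proof (miss_II_range k (beta u) ltac:(lra)).
  apply Rmult_le_compat_l; lra.
Qed.

(* If Player I has exhausted his resource at u < 1 (and the game reaches
   time 1), the survival bound still holds at u: approach u by times v where
   the resource is small and positive. *)
Lemma survival_at_exhaustion u : e = 1 -> 0 < u < 1 -> beta u = 0 -> 0 < beta 0 ->
  1 - miss_II k (beta 0) <= survival_I P1 beta u.
Proof.
  intros He1 Hu Hbu Hx0. set (B := 1 - miss_II k (beta 0)).
  pose proof (miss_II_range k (beta 0) ltac:(lra)).
  assert (Hmon_u : nonincreasing_on beta 0 u) by (apply (nonincreasing_sub beta 0 1); auto; lra).
  assert (HM0 : 0 <= - lnq P1 u) by (pose proof (lnq_nonpos P1 HP1 u ltac:(lra)); lra).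
  apply (le_of_linear_defect B (- lnq P1 u) _ (beta 0 / 2)); [unfold B; lra|lra|lra|].
  intros c Hc.
  destruct (IVT_within beta 0 u c ltac:(lra)) as [v [Hv Hbv]].
  { intros t Ht. apply cont_within_of_unif; auto. apply (unif_cont_sub beta 0 1); auto; lra. }
  { lra. }
  assert (Hv0 : 0 < v) by (destruct (Req_dec v 0) as [->|]; lra).
  assert (Hvu : v < u) by (destruct (Req_dec v u) as [->|]; lra).
  pose proof (survival_ge_ratio v ltac:(lra) ltac:(lra) ltac:(lra)) as HFv.
  pose proof (miss_II_range k (beta v) ltac:(pose proof (Hrange v); lra)).
  pose proof (survival_I_factor_lower P1 beta v u HP1 Hmon_u ltac:(lra) ltac:(lra)) as Hexp.
  rewrite Hbv, Hbu in Hexp.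
  assert (B <= survival_I P1 beta v).
  { unfold survival_I in *. pose proof (exp_pos (- RS_int (lnq P1) beta 0 v)). unfold B; nra. }
  pose proof (exp_pos (- RS_int (lnq P1) beta v u)).
  rewrite (survival_I_split P1 beta v u HP1 Hmon_u ltac:(lra) ltac:(lra)).
  destruct (Rle_lt_dec 0 (1 - - lnq P1 u * c)).
  - apply Rmult_le_compat; unfold B in *; lra.
  - unfold survival_I in *. pose proof (exp_pos (- RS_int (lnq P1) beta 0 v)). unfold B in *; nra.
Qed.

Lemma survival_ge_before_end u : e = 1 -> 0 <= u < 1 ->
  1 - miss_II k (beta 0) <= survival_I P1 beta u.
Proof.
  intros He1 Hu. pose proof (miss_II_range k (beta 0) ltac:(pose proof (Hrange 0); lra)).
  destruct (Req_dec u 0) as [->|Hu0]; [rewrite survival_I_zero; lra|].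
  destruct (Req_dec (beta 0) 0) as [Hx0|Hx0].
  { unfold survival_I. rewrite RS_int_const_integrator; try lra.
    - rewrite Ropp_0, exp_0. lra.
    - apply (lnq_unif_cont P1 HP1); lra.
    - intros t Ht. pose proof (Hrange t ltac:(lra)). lra. }
  pose proof (Hrange u ltac:(lra)). pose proof (Hrange 0 ltac:(lra)).
  destruct (Req_dec (beta u) 0) as [Hbu|Hbu].
  - apply survival_at_exhaustion; auto; lra.
  - pose proof (survival_ge_ratio u ltac:(lra) ltac:(lra) ltac:(lra)).
    pose proof (miss_II_range k (beta u) ltac:(lra)).
    pose proof (exp_pos (- RS_int (lnq P1) beta 0 u)). unfold survival_I in *. nra.
Qed.

Lemma survival_bound_II :
  1 - miss_II k (beta 0) <= (1 - phi P1 beta e) * (1 - miss_II k (beta e)).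
Proof.
  pose proof (Hrange e He) as Hye. destruct (Req_dec (beta e) 0) as [Hy0|Hy0].
  - assert (He1 : e = 1) by (rewrite <- Hon, Hy0; apply curve_zero, HTk).
    rewrite Hy0, miss_II_zero by lia.
    destruct (phi_at_end P1 beta HP1 Hmon) as [L [HL [_ [_ Happ]]]]. rewrite He1, HL.
    apply Rnot_lt_le; intro Hlt.
    destruct (Happ (1 - miss_II k (beta 0) - L) ltac:(lra)) as [u [Hu Hfu]].
    pose proof (survival_ge_before_end u He1 Hu). lra.
  - assert (Hpos : 0 < beta e) by lra.
    assert (He1 : e < 1) by (rewrite <- Hon; apply (curve_lt1 _ HTk); lra).
    assert (He0 : 0 < e) by (rewrite <- Hon; apply (curve_pos _ HTk); lra).
    rewrite phi_before_end by auto. replace (1 - (1 - survival_I P1 beta e)) with (survival_I P1 beta e) by ring.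
    rewrite Rmult_comm. apply survival_ge_ratio; auto; lra.
Qed.
End CurveActionII.

Section ResponseII.
Variables (al : R -> R) (eta : nat -> R).
Hypothesis Hal : consumption_fn a al.
Hypothesis Heta : T_response_II T m al eta.

Let p j := prev_moment m eta j.

Lemma al_mono : nonincreasing_on al 0 1. Proof. intros s t ? ? ?. apply Hal; lra. Qed.
Lemma al_nonneg t : 0 <= t <= 1 -> 0 <= al t. Proof. apply Hal. Qed.
Lemma al_le_a t : 0 <= t <= 1 -> al t <= a.
Proof. intros. rewrite <- (proj1 Hal). apply al_mono; lra. Qed.

Lemma al_cont_within t : 0 <= t <= 1 -> cont_within al 0 1 t.
Proof.
  intros Ht. destruct Hal as [_ [_ [_ [Hc _]]]].
  intros eps He. destruct (limit_elim _ _ _ _ (Hc t Ht) eps He) as [d [Hd H]]. exists d; split; auto.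
Qed.

Lemma p_next j : (j < m)%nat -> p j = eta (S j).
Proof. intros. unfold p, prev_moment. destruct (Nat.eqb_spec j m); [lia|auto]. Qed.

Lemma response_on_curve j : (1 <= j <= m)%nat -> 0 <= p j <= 1 -> p j <= T j (al (p j)) ->
  (p j <= eta j <= 1) /\ T j (al (eta j)) = eta j.
Proof.
  intros Hj Hp Hinv. destruct (Heta j Hj) as [H1 [H2 H3]]. fold (p j) in H1, H3.
  pose proof (curve_T j ltac:(lia)) as HTj.
  assert (He1 : eta j <= 1).
  { apply Rnot_lt_le; intro Hlt. specialize (H3 1 ltac:(lra)).
    pose proof (curve_le1 _ HTj (al 1) (al_nonneg 1 ltac:(lra))). lra. }
  split; [lra|]. apply Rle_antisym; auto.
  destruct (Req_dec (p j) (eta j)) as [Eq|Ne]; [rewrite <- Eq; auto|].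
  apply Rnot_lt_le; intro Hlt. set (e := eta j) in *. set (d0 := e - T j (al e)).
  assert (Hcw : cont_within (fun s => T j (al s)) 0 1 e).
  { apply (cont_within_comp (T j) al 0 1 0 a); [apply al_cont_within; lra| |lra|].
    - intros s Hs; split; [apply al_nonneg|apply al_le_a]; auto.
    - apply curve_cont_within; auto. apply al_nonneg; lra. }
  destruct (Hcw (d0 / 2) ltac:(unfold d0; lra)) as [d [Hd Hc]].
  set (s := Rmax (p j) (e - Rmin d d0 / 2)).
  assert (0 < Rmin d d0) by (apply Rmin_pos; unfold d0; lra).
  pose proof (Rmin_l d d0). pose proof (Rmin_r d d0).
  assert (Hs : p j <= s < e /\ e - Rmin d d0 / 2 <= s) by (unfold s, Rmax; destruct Rle_dec; lra).
  specialize (H3 s ltac:(lra)). specialize (Hc s ltac:(lra) ltac:(rewrite Rabs_left; lra)).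
  apply Rabs_def2 in Hc. unfold d0 in *. lra.
Qed.

Section PeriodII.
Variables (k : nat) (beta : R -> R).
Hypothesis Hk : (1 <= k <= m)%nat.
Hypothesis Hp : 0 <= p k <= 1.
Hypothesis Hinv : p k <= T k (al (p k)).
Hypothesis Hb : forall t, 0 <= t -> beta t = al (Rmax (p k) t).

Lemma periodII_mono : nonincreasing_on beta 0 1.
Proof. intros s t ? ? ?. rewrite !Hb by lra. apply al_mono; unfold Rmax; repeat destruct Rle_dec; lra. Qed.

Lemma periodII_unif_cont : unif_cont beta 0 1.
Proof.
  apply (unif_cont_ext (fun t => al (Rmax (p k) t))); [intros; rewrite Hb; auto; lra|].
  apply unif_cont_shift; [lra|]. apply (unif_cont_sub al 0 1); [|lra|lra].
  apply unif_cont_of_within; [lra|]. exact al_cont_within.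
Qed.

Lemma periodII_range t : 0 <= t <= 1 -> 0 <= beta t <= beta 0.
Proof.
  intros Ht. rewrite !Hb by lra.
  split; [apply al_nonneg|apply al_mono]; unfold Rmax; repeat destruct Rle_dec; lra.
Qed.

Lemma periodII_behind t : 0 <= t <= eta k -> t <= T k (beta t).
Proof.
  intros Ht. rewrite Hb by lra. destruct (Heta k Hk) as [_ [_ H3]]. fold (p k) in H3.
  destruct (Rlt_dec t (p k)) as [Hlt|Hge].
  - replace (Rmax (p k) t) with (p k) by (unfold Rmax; destruct Rle_dec; lra). lra.
  - replace (Rmax (p k) t) with t by (unfold Rmax; destruct Rle_dec; lra).
    destruct (Req_dec t (eta k)) as [->|Hne]; [|left; apply H3; lra].
    rewrite (proj2 (response_on_curve k Hk Hp Hinv)). lra.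
Qed.
End PeriodII.

Lemma upper_bound_II : forall j, (j <= m)%nat -> forall beta,
  (forall t, 0 <= t -> beta t = al (Rmax (p j) t)) -> 0 <= p j <= 1 ->
  ((1 <= j)%nat -> p j <= T j (al (p j))) -> Kpay P1 P2 A1 A2 j eta beta <= value j (al (p j)).
Proof.
  induction j as [|j IH]; intros Hjm beta Hb Hp Hinv.
  - simpl. unfold value, miss_II; simpl. destruct (Rlt_dec 0 (beta 0)); lra.
  - assert (Hk : (1 <= S j <= m)%nat) by lia.
    specialize (Hinv ltac:(lia)).
    destruct (response_on_curve (S j) Hk Hp Hinv) as [[Hpe He1] HTe].
    assert (Hpj : p j = eta (S j)) by (apply p_next; lia).
    assert (Hb0 : beta 0 = al (p (S j))) by (rewrite Hb by lra; f_equal; apply Rmax_left; lra).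
    assert (Hbe : beta (eta (S j)) = al (eta (S j))) by (rewrite Hb by lra; f_equal; apply Rmax_right; lra).
    cbn [Kpay]. rewrite <- Hb0.
    apply (step_upper j (beta 0) (al (eta (S j)))); auto.
    + apply al_nonneg; lra.
    + apply survival_nonneg; auto; [lra|]. apply (nonincreasing_sub beta 0 1); [|lra|lra].
      apply (periodII_mono (S j)); auto.
    + rewrite <- Hpj. apply IH; [lia| |rewrite Hpj; lra|].
      * rewrite Hpj. apply (freeze_frozen al beta (p (S j))); auto; lra.
      * intros Hj1. rewrite Hpj. rewrite <- HTe at 1.
        apply class_T_next; [auto|exact Hj1|apply al_nonneg; lra].
    + rewrite <- Hbe. apply (survival_bound_II (S j)); auto; try lra.
      * apply (periodII_mono (S j)); auto.
      * apply (periodII_unif_cont (S j)); auto.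
      * apply (periodII_range (S j)); auto.
      * rewrite Hb0. apply al_le_a; lra.
      * apply (periodII_behind (S j)); auto.
      * rewrite Hbe; auto.
Qed.
End ResponseII.

Section CurveConsumptionI.
Variables (k : nat) (beta : R -> R) (e : R).
Hypothesis Hk : (1 <= k <= m)%nat.
Hypothesis He : 0 <= e <= 1.
Hypothesis Hmon : nonincreasing_on beta 0 e.
Hypothesis Huc : unif_cont beta 0 e.
Hypothesis Hrange : forall t, 0 <= t <= e -> 0 <= beta t <= beta 0.
Hypothesis Hx : 0 < beta 0 <= a.
Hypothesis Hbehind : forall t, 0 <= t <= e -> t <= T k (beta t).
Hypothesis Hon : forall t, 0 <= t <= e -> beta t < beta 0 -> T k (beta t) <= t.
Hypothesis Hpos : forall t, 0 <= t <= e -> t < 1 -> 0 < beta t.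

Let HTk : T_curve (T k) := curve_T k (proj1 Hk).

Lemma lnq_le_curve t : 0 <= t <= e -> t < 1 -> beta t < beta 0 -> lnq P1 t <= lnqT k (beta t).
Proof.
  intros Ht Ht1 Hlt. unfold lnqT, lnq. pose proof (Hon t Ht Hlt). pose proof (Hrange t Ht).
  pose proof (curve_pos _ HTk (beta t) ltac:(lra)).
  apply ln_monotone; [pose proof (eff_lt1 P1 HP1 t ltac:(lra)); lra|].
  assert (P1 (T k (beta t)) <= P1 t) by (apply (eff_mono P1 HP1); lra). lra.
Qed.

Lemma survival_le_ratio u : 0 < u <= e -> u < 1 ->
  (1 - miss_II k (beta u)) * survival_I P1 beta u <= 1 - miss_II k (beta 0).
Proof.
  intros Hu Hu1. pose proof (Hrange u ltac:(lra)). pose proof (Hpos u ltac:(lra) Hu1).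
  assert (Hcmp : survival_I P1 beta u <= exp (Rint (lnqT k) (beta u) (beta 0))).
  { apply exp_monotone.
    apply (RS_int_change_var_upper (lnq P1) beta (lnqT k) 0 u); try lra.
    - apply (lnq_unif_cont P1 HP1); lra.
    - apply (nonincreasing_sub beta 0 e); auto; lra.
    - apply (unif_cont_sub beta 0 e); auto; lra.
    - apply lnqT_cont_on; lia || lra.
    - intros t Ht Hlt. apply lnq_le_curve; lra. }
  rewrite (miss_II_ratio k (beta 0) (beta u)); auto; try lra.
  pose proof (miss_II_range k (beta u) ltac:(lra)).
  apply Rmult_le_compat_l; lra.
Qed.

Lemma survival_end_le : e = 1 -> 1 - phi P1 beta 1 <= 1 - miss_II k (beta 0).
Proof.
  intros He1. assert (Hmon1 : nonincreasing_on beta 0 1) by (rewrite <- He1; exact Hmon).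
  destruct (phi_at_end P1 beta HP1 Hmon1) as [L [HL [HL0 [HL1 _]]]].
  rewrite HL. replace (1 - (1 - L)) with L by ring.
  assert (HL1' : L <= 1) by (pose proof (HL1 0 ltac:(lra)); rewrite survival_I_zero in *; lra).
  apply Rnot_lt_le; intro Hlt. set (dl := L - (1 - miss_II k (beta 0))).
  destruct (miss_II_small k ltac:(lia) dl ltac:(unfold dl; lra)) as [z0 [Hz0 Hsmall]].
  set (z1 := Rmin z0 (beta 0)). assert (Hz1 : 0 < z1) by (unfold z1; apply Rmin_pos; lra).
  pose proof (Rmin_l z0 (beta 0)). pose proof (Rmin_r z0 (beta 0)). fold z1 in H, H0.
  set (u := T k z1). pose proof (curve_pos _ HTk z1 ltac:(lra)). pose proof (curve_lt1 _ HTk z1 Hz1).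
  assert (Hbu : beta u <= z1).
  { apply Rnot_lt_le; intro Hgt. pose proof (Hbehind u ltac:(unfold u; lra)).
    pose proof (curve_strict _ HTk z1 (beta u) ltac:(lra) Hgt). unfold u in *. lra. }
  pose proof (Hpos u ltac:(unfold u; lra) ltac:(unfold u; lra)).
  pose proof (survival_le_ratio u ltac:(unfold u; lra) ltac:(unfold u; lra)) as Hratio.
  pose proof (HL1 u ltac:(unfold u; lra)).
  specialize (Hsmall (beta u) ltac:(lra)). pose proof (miss_II_range k (beta u) ltac:(lra)).
  assert (L * (1 - miss_II k (beta u)) <= 1 - miss_II k (beta 0)).
  { eapply Rle_trans; [|exact Hratio]. rewrite Rmult_comm. apply Rmult_le_compat_l; lra. }
  unfold dl in Hsmall. nra.
Qed.

Lemma survival_bound_I :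
  (1 - phi P1 beta e) * (1 - miss_II k (beta e)) <= 1 - miss_II k (beta 0).
Proof.
  destruct (Rle_lt_or_eq_dec e 1 (proj2 He)) as [He1|He1].
  - rewrite phi_before_end by auto. replace (1 - (1 - survival_I P1 beta e)) with (survival_I P1 beta e) by ring.
    destruct (Req_dec e 0) as [He0|He0].
    + rewrite He0, survival_I_zero. lra.
    + rewrite Rmult_comm. apply survival_le_ratio; lra.
  - assert (Hy0 : beta e = 0).
    { pose proof (Hrange e ltac:(lra)). destruct (Req_dec (beta e) 0) as [|Hne]; auto.
      pose proof (Hbehind e ltac:(lra)). pose proof (curve_lt1 _ HTk (beta e) ltac:(lra)). lra. }
    rewrite Hy0, miss_II_zero, Rminus_0_r, Rmult_1_r by lia. rewrite He1. apply survival_end_le; auto.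
Qed.
End CurveConsumptionI.

Section ResponseI.
Variables (eta : nat -> R) (al : R -> R).
Hypothesis Ham : action_moments m eta.
Hypothesis Hres : T_response_I T a m eta al.

Let p j := prev_moment m eta j.

Lemma p_next_I j : (j < m)%nat -> p j = eta (S j).
Proof. intros. unfold p, prev_moment. destruct (Nat.eqb_spec j m); [lia|auto]. Qed.

Lemma period_bounds k : (1 <= k <= m)%nat -> 0 <= p k <= eta k /\ eta k <= 1.
Proof.
  intros Hk. destruct Ham as [H1 H2]. pose proof (H1 k Hk).
  destruct (Nat.eq_dec k m) as [->|Hne].
  - unfold p, prev_moment. rewrite Nat.eqb_refl. lra.
  - rewrite p_next_I by lia. pose proof (H1 (S k) ltac:(lia)). pose proof (H2 k ltac:(lia) ltac:(lia)). lra.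
Qed.

Section PeriodI.
Variable k : nat.
Hypothesis Hk : (1 <= k <= m)%nat.

Let HTk : T_curve (T k) := curve_T k (proj1 Hk).

Lemma per t : p k <= t <= eta k -> 0 <= al t <= al (p k) /\ t <= T k (al t) /\
  (forall z, al t < z <= al (p k) -> T k z < t).
Proof. intros Ht. destruct Hres as [_ H]. apply (H k Hk t Ht). Qed.

Lemma per_mono t1 t2 : p k <= t1 -> t1 <= t2 -> t2 <= eta k -> al t2 <= al t1.
Proof.
  intros H1 H2 H3. apply Rnot_lt_le; intro Hlt.
  destruct (per t1 ltac:(lra)) as [_ [_ Hz]]. destruct (per t2 ltac:(lra)) as [[_ Hc2] [HT2 _]].
  specialize (Hz (al t2) ltac:(lra)). lra.
Qed.

Lemma per_on_curve t : p k <= t <= eta k -> al t < al (p k) -> T k (al t) <= t.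
Proof.
  intros Ht Hlt. destruct (per t Ht) as [[H0 _] [_ Hz]]. apply Rnot_lt_le; intro Hgt.
  destruct (curve_cont_within _ HTk (al t) (al (p k)) H0 (T k (al t) - t) ltac:(lra)) as [d [Hd Hc]].
  pose proof (Rmin_l (al (p k)) (al t + d / 2)). pose proof (Rmin_r (al (p k)) (al t + d / 2)).
  set (z := Rmin (al (p k)) (al t + d / 2)) in *.
  assert (al t < z) by (unfold z, Rmin; destruct Rle_dec; lra).
  specialize (Hz z ltac:(lra)).
  specialize (Hc z ltac:(lra) ltac:(rewrite Rabs_pos_eq; lra)).
  apply Rabs_def2 in Hc. lra.
Qed.

Lemma per_pos t : p k <= t <= eta k -> t < 1 -> 0 < al (p k) -> 0 < al t.
Proof.
  intros Ht Ht1 Hcap. destruct (per t Ht) as [[H0 _] [_ Hz]].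
  destruct (Req_dec (al t) 0) as [Hz0|]; [exfalso|lra].
  destruct (curve_cont_within _ HTk 0 (al (p k)) ltac:(lra) (1 - t) ltac:(lra)) as [d [Hd Hc]].
  rewrite (curve_zero _ HTk) in Hc.
  pose proof (Rmin_l (al (p k)) (d / 2)). pose proof (Rmin_r (al (p k)) (d / 2)).
  assert (0 < Rmin (al (p k)) (d / 2)) by (apply Rmin_pos; lra).
  set (z := Rmin (al (p k)) (d / 2)) in *.
  specialize (Hz z ltac:(lra)).
  specialize (Hc z ltac:(lra) ltac:(rewrite Rminus_0_r, Rabs_pos_eq; lra)).
  apply Rabs_def2 in Hc. lra.
Qed.

(* Uniform continuity: a drop of eps in the resource takes at least the
   minimal time mm that the curve needs to rise over a resource gap eps. *)
Lemma per_unif_cont : unif_cont al (p k) (eta k).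
Proof.
  intros eps He. destruct (Rlt_le_dec (al (p k)) eps) as [Hbig|Hsm].
  - exists 1. split; [lra|]. intros t1 t2 H1 H2 _.
    destruct (per t1 H1) as [[? ?] _]. destruct (per t2 H2) as [[? ?] _]. apply Rabs_def1; lra.
  - set (gap := fun z => T k (clamp 0 (al (p k)) z) - T k (clamp 0 (al (p k)) (z + eps))).
    assert (Hcont : continuity gap).
    { assert (HC := cont_clamp (T k) 0 (al (p k)) ltac:(lra) (fun t Ht => curve_cont_within _ HTk t (al (p k)) (proj1 Ht))).
      intros z. apply continuity_pt_minus; [apply HC|].
      apply (continuity_pt_comp (fun z => z + eps) (fun z => T k (clamp 0 (al (p k)) z))); [|apply HC].
      apply continuity_pt_plus; [apply derivable_continuous_pt, derivable_pt_id|apply continuity_pt_const; intros ? ?; auto]. }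
    destruct (continuity_ab_min gap 0 ((al (p k)) - eps) ltac:(lra) (fun z _ => Hcont z)) as [zs [Hmin Hzs]].
    assert (Hgap : forall z, 0 <= z <= (al (p k)) - eps -> gap z = T k z - T k (z + eps))
      by (intros z Hz; unfold gap; rewrite !clamp_id by lra; auto).
    assert (Hmm : 0 < gap zs).
    { rewrite Hgap by lra. pose proof (curve_strict _ HTk zs (zs + eps) ltac:(lra) ltac:(lra)). lra. }
    exists (gap zs). split; auto.
    assert (key : forall t1 t2, p k <= t1 <= eta k -> p k <= t2 <= eta k -> t1 <= t2 ->
      t2 - t1 < gap zs -> al t1 - al t2 < eps).
    { intros t1 t2 H1 H2 H12 Hd. apply Rnot_le_lt; intro Hge.
      destruct (per t1 H1) as [[? ?] [HT1 _]]. destruct (per t2 H2) as [[? ?] _].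
      assert (HT2 : T k (al t2) <= t2) by (apply per_on_curve; auto; lra).
      assert (T k (al t1) <= T k (al t2 + eps)) by (apply (curve_mono _ HTk); lra).
      specialize (Hmin (al t2) ltac:(lra)). rewrite (Hgap (al t2)) in Hmin by (lra).
      lra. }
    intros t1 t2 H1 H2 Hd. destruct (Rle_dec t1 t2) as [H12|H12].
    + rewrite Rabs_minus_sym, Rabs_pos_eq in Hd by lra. pose proof (per_mono t1 t2 ltac:(lra) H12 ltac:(lra)).
      pose proof (key t1 t2 H1 H2 H12 Hd). rewrite Rabs_pos_eq; lra.
    + rewrite Rabs_pos_eq in Hd by lra. pose proof (per_mono t2 t1 ltac:(lra) ltac:(lra) ltac:(lra)).
      pose proof (key t2 t1 H2 H1 ltac:(lra) ltac:(lra)). rewrite Rabs_left1; lra.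
Qed.

Variable beta : R -> R.
Hypothesis Hb : forall t, 0 <= t -> beta t = al (Rmax (p k) t).

Lemma periodI_beta t : 0 <= t -> (t < p k /\ beta t = al (p k)) \/ (p k <= t /\ beta t = al t).
Proof.
  intros Ht. rewrite Hb by auto. destruct (Rlt_le_dec t (p k)) as [Hlt|Hge].
  - left. split; auto. f_equal. unfold Rmax; destruct Rle_dec; lra.
  - right. split; auto. f_equal. unfold Rmax; destruct Rle_dec; lra.
Qed.

Lemma periodI_start : beta 0 = al (p k).
Proof.
  pose proof (period_bounds k Hk).
  destruct (periodI_beta 0 (Rle_refl 0)) as [[_ ->]|[Hp ->]]; auto. f_equal; lra.
Qed.

Lemma periodI_range t : 0 <= t <= eta k -> 0 <= beta t <= beta 0.
Proof.
  intros Ht. pose proof (period_bounds k Hk). rewrite periodI_start.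
  destruct (periodI_beta t ltac:(lra)) as [[_ ->]|[Hp ->]]; [|apply per; lra].
  destruct (per (p k) ltac:(lra)) as [? _]. lra.
Qed.

Lemma periodI_mono : nonincreasing_on beta 0 (eta k).
Proof.
  intros t1 t2 H1 H2 H3. pose proof (periodI_range t2 ltac:(lra)). rewrite periodI_start in H.
  destruct (periodI_beta t1 ltac:(lra)) as [[? ->]|[? ->]]; [lra|].
  destruct (periodI_beta t2 ltac:(lra)) as [[? ->]|[? ->]]; [lra|].
  apply per_mono; lra.
Qed.

Lemma periodI_unif_cont : unif_cont beta 0 (eta k).
Proof.
  pose proof (period_bounds k Hk).
  apply (unif_cont_ext (fun t => al (Rmax (p k) t))); [intros; rewrite Hb; auto; lra|].
  apply unif_cont_shift; [lra|]. apply per_unif_cont.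
Qed.

Lemma periodI_behind t : 0 <= t <= eta k -> t <= T k (beta t).
Proof.
  intros Ht. pose proof (period_bounds k Hk).
  destruct (periodI_beta t ltac:(lra)) as [[? ->]|[? ->]]; [|apply per; lra].
  destruct (per (p k) ltac:(lra)) as [_ [? _]]. lra.
Qed.

Lemma periodI_on_curve t : 0 <= t <= eta k -> beta t < beta 0 -> T k (beta t) <= t.
Proof.
  intros Ht Hlt. rewrite periodI_start in Hlt.
  destruct (periodI_beta t ltac:(lra)) as [[? Heq]|[? Heq]]; rewrite Heq in *; [lra|].
  apply per_on_curve; auto; lra.
Qed.

Lemma periodI_pos t : 0 < al (p k) -> 0 <= t <= eta k -> t < 1 -> 0 < beta t.
Proof.
  intros Hcap Ht Ht1. destruct (periodI_beta t ltac:(lra)) as [[? ->]|[? ->]]; auto.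
  apply per_pos; auto; lra.
Qed.
End PeriodI.

Lemma p_nonneg j : (j <= m)%nat -> 0 <= p j.
Proof.
  intros Hj. destruct (Nat.eq_dec j m) as [->|]; [unfold p, prev_moment; rewrite Nat.eqb_refl; lra|].
  rewrite p_next_I by lia. pose proof (period_bounds (S j) ltac:(lia)). lra.
Qed.

Lemma lower_bound_I : forall j, (j <= m)%nat -> forall beta,
  (forall t, 0 <= t -> beta t = al (Rmax (p j) t)) -> p j < 1 -> 0 < al (p j) <= a ->
  value j (al (p j)) <= Kpay P1 P2 A1 A2 j eta beta.
Proof.
  induction j as [|j IH]; intros Hjm beta Hb Hp1 Hx.
  - simpl. unfold value, miss_II; simpl. rewrite Hb, Rmax_left by (try apply p_nonneg; lia || lra).
    destruct (Rlt_dec 0 (al (p 0))); lra.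
  - assert (Hk : (1 <= S j <= m)%nat) by lia.
    destruct (period_bounds (S j) Hk) as [[Hp0 Hpe] He1].
    destruct (per (S j) Hk (eta (S j)) ltac:(lra)) as [[Hy0 Hyx] [HTy _]].
    assert (Hpj : p j = eta (S j)) by (apply p_next_I; lia).
    assert (Hbe : beta (eta (S j)) = al (eta (S j))) by (rewrite Hb by lra; f_equal; apply Rmax_right; lra).
    cbn [Kpay]. rewrite <- (periodI_start (S j) Hk beta Hb).
    apply (step_lower j (beta 0) (al (eta (S j)))); auto; try lra.
    + apply survival_nonneg; auto; [lra|apply (periodI_mono (S j)); auto].
    + intros HP2e. assert (He1' : eta (S j) < 1).
      { destruct (Req_dec (eta (S j)) 1) as [Heq|]; [rewrite Heq, (eff_one P2 HP2) in HP2e; lra|lra]. }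
      rewrite <- Hpj. apply IH; [lia| |lra|].
      * rewrite Hpj. apply (freeze_frozen al beta (p (S j))); auto; lra.
      * rewrite Hpj. split; [apply (per_pos (S j)); auto; lra|lra].
    + rewrite <- Hbe. apply (survival_bound_I (S j)); auto; try lra.
      * apply (periodI_mono (S j)); auto.
      * apply (periodI_unif_cont (S j)); auto.
      * apply (periodI_range (S j)); auto.
      * rewrite (periodI_start (S j) Hk beta Hb). auto.
      * apply (periodI_behind (S j)); auto.
      * apply (periodI_on_curve (S j)); auto.
      * intros t Ht Ht1. apply (periodI_pos (S j)); auto; lra.
Qed.
End ResponseI.

Lemma prev_moment_last eta : prev_moment m eta m = 0.
Proof. unfold prev_moment. rewrite Nat.eqb_refl. reflexivity. Qed.

Lemma T_strategy_II_guarantee al eta : consumption_fn a al -> T_response_II T m al eta ->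
  Kpay P1 P2 A1 A2 m eta al <= value m a.
Proof.
  intros Hal Heta. assert (Hal0 : al 0 = a) by apply Hal.
  pose proof (upper_bound_II al eta Hal Heta m (le_n m) al) as C.
  cbv beta in C. rewrite prev_moment_last, Hal0 in C. apply C; [|lra|].
  - intros t Ht. rewrite Rmax_right; auto.
  - intros Hm. rewrite <- Hal0. left. apply (curve_pos _ (curve_T m Hm)), (al_nonneg al Hal). lra.
Qed.

Lemma T_strategy_I_guarantee eta al : 0 < a -> action_moments m eta -> T_response_I T a m eta al ->
  value m a <= Kpay P1 P2 A1 A2 m eta al.
Proof.
  intros Ha Ham Hres. assert (Hal0 : al 0 = a) by apply Hres.
  pose proof (lower_bound_I eta al Ham Hres m (le_n m) al) as C.
  cbv beta in C. rewrite prev_moment_last, Hal0 in C. apply C; [|lra|lra].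
  intros t Ht. rewrite Rmax_right; auto.
Qed.

Lemma value_exp_int0 : (1 <= m)%nat -> 0 < a ->
  value m a = A1 - (A1 + A2) * exp_int0 (lnqT m) a.
Proof.
  intros Hm Ha. pose proof (Hyp a m ltac:(lra) ltac:(lia)) as E.
  fold (lnqT m) (miss_II m a) in E. unfold value. replace (miss_II m a) with (1 - exp_int0 (lnqT m) a) by lra.
  ring.
Qed.

End Game.

Theorem theorem2 (P1 P2 : R -> R) (A1 A2 a : R) (m : nat) (T : nat -> R -> R) :
  effectiveness P1 -> effectiveness P2 ->
  0 < A1 -> 0 < A2 -> 0 < a ->
  class_T T ->
  (forall (x : R) (k : nat), 0 < x <= a -> (1 <= k <= m)%nat ->
     exp_int0 (fun al => ln (1 - P1 (T k al))) x
     + prodR k (fun i => 1 - P2 (T i x)) = 1) ->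
  let v := (A1 + A2) * prodR m (fun i => 1 - P2 (T i a)) - A2 in
  (forall (alpha : R -> R) (eta : nat -> R),
     consumption_fn a alpha -> T_response_II T m alpha eta ->
     Kpay P1 P2 A1 A2 m eta alpha <= v) /\
  (forall (eta : nat -> R) (alpha : R -> R),
     action_moments m eta -> T_response_I T a m eta alpha ->
     v <= Kpay P1 P2 A1 A2 m eta alpha) /\
  ((1 <= m)%nat ->
     v = A1 - (A1 + A2) * exp_int0 (fun al => ln (1 - P1 (T m al))) a).
Proof.
  intros HP1 HP2 HA1 HA2 Ha HT Hyp v.
  split; [|split].
  - exact (T_strategy_II_guarantee P1 P2 A1 A2 a m T HP1 HP2 HA1 HA2 HT Hyp).
  - intros eta al. exact (T_strategy_I_guarantee P1 P2 A1 A2 a m T HP1 HP2 HA1 HA2 HT Hyp eta al Ha).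
  - intros Hm. exact (value_exp_int0 P1 P2 A1 A2 a m T Hyp Hm Ha).
Qed.
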